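(* Let $m\ge2$, let $\mathcal G,\mathcal H_1,\dots,\mathcal H_m$ be real Hilbert spaces, $\boldsymbol{\mathcal H}=\mathcal H_1\oplus\cdots\oplus\mathcal H_m$, $\boldsymbol f\in\Gamma_0(\boldsymbol{\mathcal H})$, and for each $i$ let $L_i:\mathcal H_i\to\mathcal G$ be a bounded linear operator, not all $L_i$ being zero. Set $L_{m+1}=L_1$. Suppose there exists $(z_1,\dots,z_m)\in\boldsymbol{\mathcal H}$ with $\big(L_1^*(L_2z_2-L_1z_1),\dots,L_m^*(L_1z_1-L_mz_m)\big)\in\partial\boldsymbol f(z_1,\dots,z_m)$. Set $\chi=2\max_i\|L_i\|^2$, let $\varepsilon\in]0,2/(\chi+1)[$ and let $(\gamma_n)_n$ be a sequence in $[\varepsilon,(2-\varepsilon)/\chi]$. For each $i$ let $x_{i,0}\in\mathcal H_i$ and let $(a_{i,n})_n,(b_{i,n})_n$ be absolutely summable sequences in $\mathcal H_i$; set $x_{m+1,n}=x_{1,n}$. For every $n$ define $y_{i,n}=x_{i,n}-\gamma_n\big(L_i^*(L_ix_{i,n}-L_{i+1}x_{i+1,n})+a_{i,n}\big)$ for $i=1,\dots,m$, and $(x_{1,n+1},\dots,x_{m,n+1})=\operatorname{prox}_{\gamma_n\boldsymbol f}(y_{1,n},\dots,y_{m,n})+(b_{1,n},\dots,b_{m,n})$. Then there exists $(\overline x_1,\dots,\overline x_m)\in\boldsymbol{\mathcal H}$ (with $\overline x_{m+1}=\overline x_1$) such that for every $i$, $\overline x_i\in\operatorname{Argmin}_{x\in\mathcal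 H_i}\big(\boldsymbol f(\overline x_1,\dots,\overline x_{i-1},x,\overline x_{i+1},\dots,\overline x_m)+\tfrac12\|L_ix-L_{i+1}\overline x_{i+1}\|^2\big)$, and $x_{i,n}\rightharpoonup\overline x_i$ and $L_i^*\big(L_i(x_{i,n}-\overline x_i)-L_{i+1}(x_{i+1,n}-\overline x_{i+1})\big)\to0$.
   Context: $\boldsymbol{\mathcal H}$ carries the inner product $\sum_i\langle x_i,y_i\rangle$. $\Gamma_0(\mathcal K)$ denotes the proper lower semicontinuous convex functions $\mathcal K\to\left]-\infty,+\infty\right]$; $\partial$ the subdifferential; $L_i^*$ the adjoint; $\|L_i\|$ the operator norm. For $\varphi\in\Gamma_0(\mathcal K)$, $\operatorname{prox}_\varphi x=\operatorname{argmin}_y\big(\varphi(y)+\tfrac12\|x-y\|^2\big)$. $\rightharpoonup$ denotes weak convergence, $\to$ strong convergence. *)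

From Stdlib Require Import Reals Lra Lia Arith List Classical.
Open Scope R_scope.
Set Implicit Arguments.

Record Hilbert := mkHilbert {
  car :> Type;
  hzero : car;
  hadd : car -> car -> car;
  hopp : car -> car;
  hscal : R -> car -> car;
  hinner : car -> car -> R;
  hadd_assoc : forall x y z, hadd x (hadd y z) = hadd (hadd x y) z;
  hadd_comm : forall x y, hadd x y = hadd y x;
  hadd_0 : forall x, hadd hzero x = x;
  hadd_opp : forall x, hadd x (hopp x) = hzero;
  hscal_assoc : forall a b x, hscal a (hscal b x) = hscal (a * b) x;
  hscal_1 : forall x, hscal 1 x = x;
  hscal_distr_v : forall a x y, hscal a (hadd x y) = hadd (hscal a x) (hscal a y);
  hscal_distr_s : forall a b x, hscal (a + b) x = hadd (hscal a x) (hscal b x);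
  hinner_sym : forall x y, hinner x y = hinner y x;
  hinner_add_l : forall x y z, hinner (hadd x y) z = hinner x z + hinner y z;
  hinner_scal_l : forall a x y, hinner (hscal a x) y = a * hinner x y;
  hinner_pos : forall x, 0 <= hinner x x;
  hinner_def : forall x, hinner x x = 0 -> x = hzero;
  hcomplete : forall u : nat -> car,
    (forall eps, eps > 0 -> exists N, forall p q, (p >= N)%nat -> (q >= N)%nat ->
        sqrt (hinner (hadd (u p) (hopp (u q))) (hadd (u p) (hopp (u q)))) < eps) ->
    exists l, Un_cv (fun n => sqrt (hinner (hadd (u n) (hopp l)) (hadd (u n) (hopp l)))) 0
}.
Arguments hzero {h}.
Arguments hadd {h} _ _.
Arguments hopp {h} _.
Arguments hscal {h} _ _.
Arguments hinner {h} _ _.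

Definition hsub {H : Hilbert} (x y : H) : H := hadd x (hopp y).
Definition hnorm {H : Hilbert} (x : H) : R := sqrt (hinner x x).

Definition weak_cv {H : Hilbert} (u : nat -> H) (l : H) : Prop :=
  forall v : H, Un_cv (fun n => hinner (u n) v) (hinner l v).

Definition strong_cv {H : Hilbert} (u : nat -> H) (l : H) : Prop :=
  Un_cv (fun n => hnorm (hsub (u n) l)) 0.

Definition is_linear {H K : Hilbert} (L : H -> K) : Prop :=
  (forall x y, L (hadd x y) = hadd (L x) (L y)) /\
  (forall a x, L (hscal a x) = hscal a (L x)).

Definition is_bounded_linear {H K : Hilbert} (L : H -> K) : Prop :=
  is_linear L /\ exists M, forall x, hnorm (L x) <= M * hnorm x.

Definition is_adjoint {H K : Hilbert} (L : H -> K) (Ls : K -> H) : Prop :=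
  forall x y, hinner (L x) y = hinner x (Ls y).

Definition is_opnorm {H K : Hilbert} (L : H -> K) (c : R) : Prop :=
  is_lub (fun r => exists x : H, hnorm x <= 1 /\ r = hnorm (L x)) c.

(** finite index set {0,...,m-1} (index i here is H_{i+1} in the paper) *)
Definition Idx (m : nat) := {i : nat | (i < m)%nat}.

Lemma next_lt : forall m k, (k < m)%nat -> ((S k) mod m < m)%nat.
Proof. intros m k H. apply Nat.mod_upper_bound. lia. Qed.

(** cyclic successor: m-1 goes to 0 (this realises L_{m+1} = L_1, x_{m+1} = x_1) *)
Definition next {m} (i : Idx m) : Idx m :=
  exist _ ((S (proj1_sig i)) mod m) (next_lt (proj2_sig i)).

Definition Idx_eq_dec {m} (i j : Idx m) : {i = j} + {i <> j}.
Proof.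
  destruct i as [i Hi], j as [j Hj].
  destruct (Nat.eq_dec i j) as [e|ne].
  - left. subst. f_equal. apply Peano_dec.le_unique.
  - right. intro E. apply ne. inversion E. reflexivity.
Defined.

Definition sumIdx (m : nat) (g : Idx m -> R) : R :=
  fold_right Rplus 0
    (map (fun k => match lt_dec k m with
                   | left p => g (exist _ k p)
                   | right _ => 0 end) (seq 0 m)).

Definition maxIdx (m : nat) (g : Idx m -> R) : R :=
  fold_right Rmax 0
    (map (fun k => match lt_dec k m with
                   | left p => g (exist _ k p)
                   | right _ => 0 end) (seq 0 m)).

Definition Prod {m} (H : Idx m -> Hilbert) := forall i : Idx m, car (H i).

Definition padd {m} {H : Idx m -> Hilbert} (x y : Prod H) : Prod H :=
  fun i => hadd (x i) (y i).
Definition pscal {m} {H : Idx m -> Hilbert} (a : R) (x : Prod H) : Prod H :=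
  fun i => hscal a (x i).
Definition psub {m} {H : Idx m -> Hilbert} (x y : Prod H) : Prod H :=
  fun i => hsub (x i) (y i).
Definition pinner {m} {H : Idx m -> Hilbert} (x y : Prod H) : R :=
  sumIdx (fun i => hinner (x i) (y i)).
Definition pnorm {m} {H : Idx m -> Hilbert} (x : Prod H) : R := sqrt (pinner x x).

Definition upd {m} {H : Idx m -> Hilbert} (xb : Prod H) (i : Idx m) (x : H i) : Prod H :=
  fun j => match Idx_eq_dec i j with
           | left e => eq_rect i (fun k => car (H k)) x j e
           | right _ => xb j
           end.

Inductive ER := Fin (r : R) | PInf.

Definition ERle (a b : ER) : Prop :=
  match a, b with
  | _, PInf => True
  | PInf, Fin _ => False
  | Fin x, Fin y => x <= y
  end.

Definition ERadd (a b : ER) : ER :=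
  match a, b with Fin x, Fin y => Fin (x + y) | _, _ => PInf end.

(** scaling by a (positive) real *)
Definition ERscal (c : R) (a : ER) : ER :=
  match a with Fin x => Fin (c * x) | PInf => PInf end.

Definition proper {m} {H : Idx m -> Hilbert} (f : Prod H -> ER) : Prop :=
  exists x, f x <> PInf.

Definition convex {m} {H : Idx m -> Hilbert} (f : Prod H -> ER) : Prop :=
  forall x y t, 0 < t < 1 ->
    ERle (f (padd (pscal t x) (pscal (1 - t) y)))
         (ERadd (ERscal t (f x)) (ERscal (1 - t) (f y))).

Definition lsc {m} {H : Idx m -> Hilbert} (f : Prod H -> ER) : Prop :=
  forall (r : R) (u : nat -> Prod H) (x : Prod H),
    (forall n, ERle (f (u n)) (Fin r)) ->
    Un_cv (fun n => pnorm (psub (u n) x)) 0 ->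
    ERle (f x) (Fin r).

Definition Gamma0 {m} {H : Idx m -> Hilbert} (f : Prod H -> ER) : Prop :=
  proper f /\ convex f /\ lsc f.

Definition in_subdiff {m} {H : Idx m -> Hilbert} (f : Prod H -> ER) (x u : Prod H) : Prop :=
  f x <> PInf /\
  forall y, ERle (ERadd (Fin (pinner (psub y x) u)) (f x)) (f y).

Definition is_prox {m} {H : Idx m -> Hilbert} (g : R) (f : Prod H -> ER) (x p : Prod H) : Prop :=
  forall y, ERle (ERadd (ERscal g (f p)) (Fin (/2 * (pnorm (psub x p))^2)))
                 (ERadd (ERscal g (f y)) (Fin (/2 * (pnorm (psub x y))^2))).

Definition abs_summable {H : Hilbert} (a : nat -> H) : Prop :=
  exists B, forall N, sum_f_R0 (fun n => hnorm (a n)) N <= B.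

(** The proposition is then the abstract theorem read componentwise: -B c in
    the subdifferential of f at c is exactly the componentwise minimality. *)

From Stdlib Require Import Reals Lra Lia ZArith Arith List Classical
  FunctionalExtensionality ClassicalEpsilon Eqdep_dec.
Open Scope R_scope.

Arguments hadd_assoc {h}. Arguments hadd_comm {h}. Arguments hadd_0 {h}.
Arguments hadd_opp {h}. Arguments hscal_assoc {h}. Arguments hscal_1 {h}.
Arguments hscal_distr_v {h}. Arguments hscal_distr_s {h}. Arguments hinner_sym {h}.
Arguments hinner_add_l {h}. Arguments hinner_scal_l {h}. Arguments hinner_pos {h}.
Arguments hinner_def {h}. Arguments hcomplete {h}.

Section HilbertAlgebra.
Context {K : Hilbert}.
Implicit Types x y z u v w : K.

Lemma hadd_0_r x : hadd x hzero = x.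
Proof. rewrite hadd_comm; apply hadd_0. Qed.

Lemma hadd_opp_l x : hadd (hopp x) x = hzero.
Proof. rewrite hadd_comm; apply hadd_opp. Qed.

Lemma hadd_idem_zero u : hadd u u = u -> u = hzero.
Proof.
  intro E. rewrite <- (hadd_opp u). rewrite <- E at 2.
  rewrite <- hadd_assoc, hadd_opp, hadd_0_r. reflexivity.
Qed.

Lemma hscal_0 x : hscal 0 x = @hzero K.
Proof. apply hadd_idem_zero. rewrite <- hscal_distr_s. f_equal. ring. Qed.

Lemma hinner_0l y : hinner (@hzero K) y = 0.
Proof. rewrite <- (hscal_0 hzero), hinner_scal_l. ring. Qed.

Lemma hinner_opp_l x y : hinner (hopp x) y = - hinner x y.
Proof.
  assert (E : hinner (hadd x (hopp x)) y = 0) by (rewrite hadd_opp; apply hinner_0l).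
  rewrite hinner_add_l in E. lra.
Qed.

Lemma hinner_add_r x y z : hinner x (hadd y z) = hinner x y + hinner x z.
Proof. rewrite hinner_sym, hinner_add_l, (hinner_sym y), (hinner_sym z); auto. Qed.

Lemma hinner_scal_r a x y : hinner x (hscal a y) = a * hinner x y.
Proof. rewrite hinner_sym, hinner_scal_l, (hinner_sym y); auto. Qed.

Lemma hinner_opp_r x y : hinner x (hopp y) = - hinner x y.
Proof. rewrite hinner_sym, hinner_opp_l, (hinner_sym y); auto. Qed.

Lemma hinner_0r x : hinner x (@hzero K) = 0.
Proof. rewrite hinner_sym; apply hinner_0l. Qed.

Lemma hinner_sub_l x y z : hinner (hsub x y) z = hinner x z - hinner y z.
Proof. unfold hsub. rewrite hinner_add_l, hinner_opp_l. ring. Qed.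

Lemma hinner_sub_r x y z : hinner x (hsub y z) = hinner x y - hinner x z.
Proof. unfold hsub. rewrite hinner_add_r, hinner_opp_r. ring. Qed.

(** Two vectors at squared distance zero are equal; every vector identity
    below is proved this way, by expanding the squared distance. *)
Lemma eq_of_dist0 u v : hinner (hsub u v) (hsub u v) = 0 -> u = v.
Proof.
  intro E. apply hinner_def in E. unfold hsub in E.
  rewrite <- (hadd_0 v), <- E, <- hadd_assoc, hadd_opp_l, hadd_0_r. reflexivity.
Qed.

Lemma hnorm_sq x : hnorm x ^ 2 = hinner x x.
Proof. unfold hnorm. apply pow2_sqrt, hinner_pos. Qed.

Lemma hnorm_mul_self x : hnorm x * hnorm x = hinner x x.
Proof. unfold hnorm. apply sqrt_sqrt, hinner_pos. Qed.

Lemma hnorm_pos x : 0 <= hnorm x.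
Proof. apply sqrt_pos. Qed.

Lemma hnorm_opp x : hnorm (hopp x) = hnorm x.
Proof. unfold hnorm. rewrite hinner_opp_l, hinner_opp_r. f_equal; ring. Qed.

Lemma hnorm_scal g u : hnorm (hscal g u) = Rabs g * hnorm u.
Proof.
  unfold hnorm. rewrite hinner_scal_l, hinner_scal_r, <- Rmult_assoc.
  rewrite sqrt_mult_alt by (pose proof (Rle_0_sqr g); unfold Rsqr in *; lra).
  f_equal. rewrite <- sqrt_Rsqr_abs. reflexivity.
Qed.

(** Cauchy-Schwarz, by expanding ||x - t y||^2 >= 0 for a suitable t. *)
Lemma cauchy_schwarz_sq x y : (hinner x y)^2 <= hinner x x * hinner y y.
Proof.
  pose proof (hinner_pos x). pose proof (hinner_pos y).
  destruct (Req_dec (hinner y y) 0) as [E|E].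
  - destruct (Req_dec (hinner x y) 0) as [E2|E2]; [rewrite E2, E; nra|].
    set (t := (hinner x x + 1) / (2 * hinner x y)).
    pose proof (hinner_pos (hsub x (hscal t y))) as P.
    rewrite !hinner_sub_l, !hinner_sub_r, !hinner_scal_l, !hinner_scal_r in P.
    rewrite (hinner_sym y x), E in P.
    assert (t * hinner x y = (hinner x x + 1) / 2) by (unfold t; field; auto).
    exfalso. nra.
  - assert (Hy : 0 < hinner y y) by lra.
    set (t := hinner x y / hinner y y).
    pose proof (hinner_pos (hsub x (hscal t y))) as P.
    rewrite !hinner_sub_l, !hinner_sub_r, !hinner_scal_l, !hinner_scal_r in P.
    rewrite (hinner_sym y x) in P.
    assert (Et : t * hinner y y = hinner x y) by (unfold t; field; auto).
    assert (Q : t * hinner x y <= hinner x x) by nra.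
    assert (t * hinner x y * hinner y y = hinner x y ^ 2) by (rewrite Rmult_assoc, (Rmult_comm (hinner x y)), <- Rmult_assoc, Et; ring).
    apply (Rmult_le_compat_r (hinner y y)) in Q; lra.
Qed.

Lemma cauchy_schwarz x y : hinner x y <= hnorm x * hnorm y.
Proof.
  unfold hnorm. rewrite <- sqrt_mult_alt by apply hinner_pos.
  destruct (Rle_or_lt (hinner x y) 0).
  { pose proof (sqrt_pos (hinner x x * hinner y y)); lra. }
  rewrite <- (sqrt_square (hinner x y)) by lra.
  apply sqrt_le_1_alt. pose proof (cauchy_schwarz_sq x y). simpl in *. lra.
Qed.

Lemma cauchy_schwarz_abs x y : Rabs (hinner x y) <= hnorm x * hnorm y.
Proof.
  unfold Rabs; destruct Rcase_abs.
  - pose proof (cauchy_schwarz x (hopp y)). rewrite hinner_opp_r, hnorm_opp in *. lra.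
  - apply cauchy_schwarz.
Qed.

Lemma cauchy_schwarz_bounds x y :
  - (hnorm x * hnorm y) <= hinner x y <= hnorm x * hnorm y.
Proof. pose proof (cauchy_schwarz_abs x y). unfold Rabs in *; destruct Rcase_abs; lra. Qed.

Lemma hnorm_triangle x y : hnorm (hadd x y) <= hnorm x + hnorm y.
Proof.
  pose proof (hnorm_pos x). pose proof (hnorm_pos y). pose proof (hnorm_pos (hadd x y)).
  apply Rsqr_incr_0_var; [|nra]. unfold Rsqr.
  rewrite hnorm_mul_self, hinner_add_l, !hinner_add_r, (hinner_sym y x).
  pose proof (cauchy_schwarz x y). rewrite <- !hnorm_mul_self. nra.
Qed.

Lemma hnorm_triangle_sub x y : hnorm (hsub x y) <= hnorm x + hnorm y.
Proof. unfold hsub. rewrite <- (hnorm_opp y). apply hnorm_triangle. Qed.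

End HilbertAlgebra.

(** [iexp] expands inner products of linear combinations into inner products
    of atoms, oriented consistently so that [ring]/[lra] can finish. *)
Create HintDb iexp.
#[export] Hint Rewrite @hinner_sub_l @hinner_sub_r @hinner_add_l @hinner_add_r
  @hinner_scal_l @hinner_scal_r @hinner_opp_l @hinner_opp_r @hinner_0l @hinner_0r : iexp.

Ltac symnorm :=
  repeat match goal with |- context [hinner ?a ?b] =>
    tryif constr_eq a b then fail else
    match goal with |- context [hinner b a] => rewrite (hinner_sym b a) end end.
Ltac iexp := autorewrite with iexp; symnorm.

Lemma hopp_scal {K : Hilbert} (v : K) : hopp v = hscal (-1) v.
Proof. apply eq_of_dist0. iexp. ring. Qed.

(** ** Real sequences *)

Lemma cv_const (c : R) : Un_cv (fun _ => c) c.
Proof. intros e He. exists 0%nat. intros. unfold R_dist. rewrite Rminus_diag, Rabs_R0. lra. Qed.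

Lemma cv_plus0 (u w : nat -> R) : Un_cv u 0 -> Un_cv w 0 -> Un_cv (fun n => u n + w n) 0.
Proof. intros. replace 0 with (0 + 0) by ring. apply CV_plus; auto. Qed.

Lemma cv_scal0 (u : nat -> R) c : Un_cv u 0 -> Un_cv (fun n => c * u n) 0.
Proof. intros. replace 0 with (c * 0) by ring. apply CV_mult; auto. apply cv_const. Qed.

Lemma cv_reindex (u : nat -> R) l (s : nat -> nat) :
  (forall k, (s k >= k)%nat) -> Un_cv u l -> Un_cv (fun k => u (s k)) l.
Proof. intros Hs H e He. destruct (H e He) as [N HN]. exists N. intros n Hn. apply HN. specialize (Hs n). lia. Qed.

Lemma cv_shift (u : nat -> R) l N : Un_cv u l -> Un_cv (fun k => u (k + N)%nat) l.
Proof. apply cv_reindex. intro; lia. Qed.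

Lemma cv_of_sqrt_cv (a : nat -> R) :
  (forall n, 0 <= a n) -> Un_cv (fun n => sqrt (a n)) 0 -> Un_cv a 0.
Proof.
  intros P H. replace 0 with (0 * 0) by ring.
  eapply Un_cv_ext. 2: apply (CV_mult _ _ _ _ H H). intro n. apply sqrt_sqrt, P.
Qed.

Lemma sqrt_cv_of_cv (a : nat -> R) :
  (forall n, 0 <= a n) -> Un_cv a 0 -> Un_cv (fun n => sqrt (a n)) 0.
Proof.
  intros P H e He. destruct (H (e*e)) as [N HN]; [nra|]. exists N. intros n Hn.
  specialize (HN n Hn). unfold R_dist in *. rewrite Rminus_0_r in *.
  rewrite Rabs_right in HN by (specialize (P n); lra).
  rewrite Rabs_right by (apply Rle_ge, sqrt_pos).
  rewrite <- (sqrt_square e) by lra. apply sqrt_lt_1_alt. split; auto.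
Qed.

Lemma cv_eventually_lt (u : nat -> R) l a :
  Un_cv u l -> l < a -> exists N, forall n, (n >= N)%nat -> u n < a.
Proof.
  intros H Hl. destruct (H (a - l)) as [N HN]; [lra|]. exists N. intros n Hn.
  specialize (HN n Hn). unfold R_dist in HN. apply Rabs_def2 in HN. lra.
Qed.

Lemma cv_eventually_gt (u : nat -> R) l a :
  Un_cv u l -> a < l -> exists N, forall n, (n >= N)%nat -> a < u n.
Proof.
  intros H Hl. destruct (H (l - a)) as [N HN]; [lra|]. exists N. intros n Hn.
  specialize (HN n Hn). unfold R_dist in HN. apply Rabs_def2 in HN. lra.
Qed.

Lemma cv_ge (u : nat -> R) l a :
  Un_cv u l -> (exists N, forall n, (n >= N)%nat -> a <= u n) -> a <= l.
Proof.
  intros H [N HN]. destruct (Rle_or_lt a l) as [|Hlt]; auto.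
  destruct (cv_eventually_lt u l a H Hlt) as [N0 H0].
  specialize (H0 (N + N0)%nat ltac:(lia)). specialize (HN (N + N0)%nat ltac:(lia)). lra.
Qed.

Lemma INR_inv_small e : 0 < e -> exists N, forall n, (n >= N)%nat -> / (INR n + 1) < e.
Proof.
  intros He. destruct (archimed (/ e)) as [A _].
  assert (Hie : / e > 0) by (apply Rinv_0_lt_compat; lra).
  destruct (Z.le_gt_cases (up (/ e)) 0) as [Hup|Hup].
  - apply IZR_le in Hup. lra.
  - exists (Z.to_nat (up (/e))). intros n Hn.
    assert (INR n >= IZR (up (/ e))).
    { rewrite <- (Z2Nat.id (up (/e))) by lia. rewrite <- INR_IZR_INZ. apply Rle_ge, le_INR. lia. }
    rewrite <- (Rinv_inv e). apply Rinv_lt_contravar; nra.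
Qed.

Lemma cv_bounded (u : nat -> R) l : Un_cv u l -> exists M, 0 <= M /\ forall n, Rabs (u n) <= M.
Proof.
  intros H. destruct (H 1) as [N HN]; [lra|].
  assert (Init : forall K, exists M, forall n, (n <= K)%nat -> Rabs (u n) <= M).
  { induction K as [|K [M HM]].
    - exists (Rabs (u 0%nat)). intros n Hn. replace n with 0%nat by lia. lra.
    - exists (Rmax M (Rabs (u (S K)))). intros n Hn.
      destruct (Nat.eq_dec n (S K)); [subst; apply Rmax_r|].
      eapply Rle_trans; [apply HM; lia | apply Rmax_l]. }
  destruct (Init N) as [M HM]. exists (Rmax (Rabs M) (Rabs l + 1)).
  split; [eapply Rle_trans; [apply Rabs_pos | apply Rmax_l]|]. intros n.
  destruct (le_gt_dec n N).
  - eapply Rle_trans; [apply HM; auto|]. eapply Rle_trans; [apply RRle_abs | apply Rmax_l].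
  - eapply Rle_trans; [|apply Rmax_r]. specialize (HN n ltac:(lia)). unfold R_dist in HN.
    pose proof (Rabs_triang_inv (u n) l). lra.
Qed.

Lemma squeeze0 (u w : nat -> R) :
  (forall n, 0 <= u n) -> (forall n, u n <= w n) -> Un_cv w 0 -> Un_cv u 0.
Proof.
  intros P Hle H e He. destruct (H e He) as [N HN]. exists N. intros n Hn.
  specialize (HN n Hn). specialize (Hle n). specialize (P n). unfold R_dist in *.
  rewrite Rminus_0_r in *. rewrite Rabs_right in * by lra. lra.
Qed.

Lemma summable_cv0 (e : nat -> R) A :
  (forall n, 0 <= e n) -> (forall N, sum_f_R0 e N <= A) -> Un_cv e 0.
Proof.
  intros P HA. destruct (growing_cv (fun N => sum_f_R0 e N)) as [l Hl].
  { intro n. simpl. specialize (P (S n)). lra. }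
  { exists A. intros r [N ->]. auto. }
  assert (D : Un_cv (fun n => sum_f_R0 e (S n) - sum_f_R0 e n) (l - l)).
  { apply CV_minus; [|exact Hl]. apply (cv_reindex _ _ S); [intro; lia | exact Hl]. }
  replace 0 with (l - l) by ring. intros eps He. destruct (D eps He) as [N HN].
  exists (S N). intros [|n] Hn; [lia|]. specialize (HN n ltac:(lia)). simpl in HN.
  replace (sum_f_R0 e n + e (S n) - sum_f_R0 e n) with (e (S n)) in HN by ring. exact HN.
Qed.

Lemma quasi_fejer_cv (r e : nat -> R) A :
  (forall n, 0 <= e n) -> (forall N, sum_f_R0 e N <= A) ->
  (forall n, 0 <= r n) -> (forall n, r (S n) <= r n + e n) -> exists l, Un_cv r l.
Proof.
  intros Pe HA Pr Hr.
  set (Sm := fun n => match n with O => 0 | S k => sum_f_R0 e k end).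
  assert (SA : forall n, Sm n <= A).
  { intros [|n]; simpl; [|apply HA]. specialize (HA 0%nat). specialize (Pe 0%nat). simpl in HA. lra. }
  destruct (decreasing_cv (fun n => r n - Sm n)) as [l1 Hl1].
  { intro n. specialize (Hr n). destruct n; simpl in *; lra. }
  { exists A. intros y [n ->]. unfold opp_seq. specialize (SA n). specialize (Pr n). lra. }
  destruct (growing_cv Sm) as [l2 Hl2].
  { intros [|n]; simpl; [apply Pe|]. specialize (Pe (S n)). lra. }
  { exists A. intros y [n ->]. apply SA. }
  exists (l1 + l2). eapply Un_cv_ext. 2: apply (CV_plus _ _ _ _ Hl1 Hl2). intro n. simpl. ring.
Qed.

(** One-step energy estimate of the forward-backward method, as a statement
    about reals: r, r' are the distances to a solution at steps n, n+1, D the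
    distance after the exact forward step (which gains q), nv, ne the norms
    before and after the backward step, ea, eb the sizes of the two errors. *)
Lemma fejer_energy_bound (r r' D q nv ne ea eb M : R) :
  0 <= D -> 0 <= q -> 0 <= ne -> 0 <= ea -> 0 <= eb -> 0 <= r <= M -> 0 <= r' <= M ->
  D * D <= r * r - q -> nv <= D + ea -> ne <= nv -> r' <= ne + eb ->
  let e := ea + eb in
  q <= r * r - r' * r' + 4 * M * e + 2 * (e * e) /\
  nv * nv - ne * ne <= r * r - r' * r' + 4 * M * e + 2 * (e * e).
Proof.
  intros HD Hq Hne Ha Hb Hr Hr' HDr Hnv Hnenv Hr'ne e.
  assert (D <= r) by nra.
  assert (r * e <= M * e) by (apply Rmult_le_compat_r; unfold e; lra).
  assert (r' * e <= M * e) by (apply Rmult_le_compat_r; unfold e; lra).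
  assert (D * e <= M * e) by (apply Rmult_le_compat_r; unfold e; lra).
  assert (0 <= M * e) by (apply Rmult_le_pos; unfold e; lra).
  assert (0 <= e * e) by nra.
  split.
  - assert (r' * r' <= (D + e) * (D + e)) by (apply Rmult_le_compat; unfold e in *; lra).
    replace ((D + e) * (D + e)) with (D * D + 2 * (D * e) + e * e) in * by ring. lra.
  - assert (nv * nv <= (r + e) * (r + e)) by (apply Rmult_le_compat; unfold e in *; lra).
    destruct (Rle_or_lt e r').
    + assert ((r' - e) * (r' - e) <= ne * ne) by (apply Rmult_le_compat; unfold e in *; lra). nra.
    + assert (r' * r' <= e * e) by (apply Rmult_le_compat; lra). nra.
Qed.

(** ** Closed convex sets and a convex cluster point of bounded sequences *)

Definition closed_set {K : Hilbert} (C : K -> Prop) : Prop :=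
  forall (u : nat -> K) x, (forall n, C (u n)) ->
    Un_cv (fun n => hnorm (hsub (u n) x)) 0 -> C x.

Definition convex_set {K : Hilbert} (C : K -> Prop) : Prop :=
  forall x y t, 0 <= t <= 1 -> C x -> C y -> C (hadd (hscal t x) (hscal (1-t) y)).

(** For Hilbert spaces this is the property of
    weak cluster points used in the convergence proof. *)
Definition convex_cluster_point {K : Hilbert} (w : nat -> K) (c : K) : Prop :=
  forall C, closed_set C -> convex_set C -> (exists N, forall n, (n >= N)%nat -> C (w n)) -> C c.

Lemma inner_cv (K : Hilbert) (u : nat -> K) x v :
  Un_cv (fun n => hnorm (hsub (u n) x)) 0 -> Un_cv (fun n => hinner (u n) v) (hinner x v).
Proof.
  intros H e He. destruct (H (e / (hnorm v + 1))) as [N HN].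
  { pose proof (hnorm_pos v). apply Rdiv_lt_0_compat; lra. }
  exists N. intros n Hn. specialize (HN n Hn). unfold R_dist in *. rewrite Rminus_0_r in HN.
  rewrite Rabs_right in HN by (apply Rle_ge, hnorm_pos).
  replace (hinner (u n) v - hinner x v) with (hinner (hsub (u n) x) v) by (iexp; ring).
  eapply Rle_lt_trans; [apply cauchy_schwarz_abs|].
  pose proof (hnorm_pos v). pose proof (hnorm_pos (hsub (u n) x)).
  apply (Rmult_lt_compat_r (hnorm v + 1)) in HN; [|lra]. field_simplify in HN; nra.
Qed.

Lemma inner_null (K : Hilbert) (u : nat -> K) v :
  Un_cv (fun n => hnorm (u n)) 0 -> Un_cv (fun n => hinner (u n) v) 0.
Proof.
  intros H. rewrite <- (hinner_0l v). apply inner_cv.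
  eapply Un_cv_ext; [|exact H]. intro n. cbv beta. f_equal. apply eq_of_dist0. iexp. ring.
Qed.

Definition halfspace {K : Hilbert} (v : K) (al : R) : K -> Prop := fun x => al <= hinner x v.

Lemma halfspace_closed (K : Hilbert) (v : K) al : closed_set (halfspace v al).
Proof.
  intros u x Hu Hc. apply (cv_ge (fun n => hinner (u n) v)); [apply inner_cv, Hc|].
  exists 0%nat. intros; apply Hu.
Qed.

Lemma halfspace_convex (K : Hilbert) (v : K) al : convex_set (halfspace v al).
Proof. intros x y t Ht Hx Hy. unfold halfspace in *. iexp. nra. Qed.

Lemma convex_cluster_halfspace (K : Hilbert) (w : nat -> K) c v al :
  convex_cluster_point w c -> (exists N, forall n, (n >= N)%nat -> al <= hinner (w n) v) ->
  al <= hinner c v.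
Proof. intros Hc Hev. apply (Hc (halfspace v al)); [apply halfspace_closed | apply halfspace_convex | exact Hev]. Qed.

Lemma convex_cluster_inner_limit (K : Hilbert) (w : nat -> K) c v l :
  convex_cluster_point w c -> Un_cv (fun n => hinner (w n) v) l -> hinner c v = l.
Proof.
  intros Hc Hl. apply Rle_antisym; apply Rnot_lt_le; intro Hlt.
  - assert (Hm : hinner c (hopp v) >= - ((hinner c v + l) / 2)).
    { apply Rle_ge, convex_cluster_halfspace with (w := w); auto.
      destruct (cv_eventually_lt _ _ ((hinner c v + l) / 2) Hl) as [N HN]; [lra|].
      exists N. intros n Hn. specialize (HN n Hn). rewrite hinner_opp_r. lra. }
    rewrite hinner_opp_r in Hm. lra.
  - assert (Hm : (hinner c v + l) / 2 <= hinner c v).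
    { apply convex_cluster_halfspace with (w := w); auto.
      destruct (cv_eventually_gt _ _ ((hinner c v + l) / 2) Hl) as [N HN]; [lra|].
      exists N. intros n Hn. specialize (HN n Hn). lra. }
    lra.
Qed.

Section ConvexClusterPoint.
Variable K : Hilbert.

Lemma parallelogram (x y : K) :
  hinner (hsub x y) (hsub x y) =
  2 * hinner x x + 2 * hinner y y
  - 4 * hinner (hadd (hscal (/2) x) (hscal (1 - /2) y)) (hadd (hscal (/2) x) (hscal (1 - /2) y)).
Proof. iexp. field. Qed.

Lemma sq_norm_infimum (T : K -> Prop) (x0 : K) : T x0 ->
  exists lam, (forall y, T y -> lam <= hinner y y) /\
              (forall d, 0 < d -> exists y, T y /\ hinner y y < lam + d).
Proof.
  intro Hx0.
  destruct (completeness (fun r => exists y, T y /\ r = - hinner y y)) as [s [Hub Hlub]].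
  { exists 0. intros r [y [_ ->]]. pose proof (hinner_pos y). lra. }
  { exists (- hinner x0 x0). exists x0. auto. }
  exists (- s). split.
  - intros y Hy. assert (- hinner y y <= s) by (apply Hub; exists y; auto). lra.
  - intros d Hd. apply NNPP. intro Hno.
    assert (s <= s - d); [|lra].
    apply Hlub. intros r [y [Hy ->]]. apply Rnot_lt_le. intro Hlt. apply Hno. exists y. split; auto. lra.
Qed.

Definition tail_hull (w : nat -> K) (N : nat) (x : K) : Prop :=
  forall C, closed_set C -> convex_set C -> (forall n, (n >= N)%nat -> C (w n)) -> C x.

Lemma tail_hull_antitone w N N' x : (N <= N')%nat -> tail_hull w N' x -> tail_hull w N x.
Proof. intros HN Hx C Cc Cv Ht. apply Hx; auto. intros n Hn. apply Ht. lia. Qed.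

Lemma tail_hull_convex w N : convex_set (tail_hull w N).
Proof. intros x y t Ht Hx Hy C Cc Cv Htl. apply Cv; [exact Ht | apply Hx | apply Hy]; auto. Qed.

(** Every bounded sequence has a convex cluster point: the minimal-norm
    points y_N of the tail hulls form a Cauchy sequence, because the infima
    lam_N increase to a finite limit and, by the parallelogram law,
    ||y_p - y_q||^2 <= 2 (lam_q - lam_p) + (slack of y_p and y_q) for p <= q. *)
Lemma bounded_convex_cluster_point (w : nat -> K) (M : R) :
  (forall n, hinner (w n) (w n) <= M) -> exists c, convex_cluster_point w c.
Proof.
  intros HM.
  assert (Hw : forall N, tail_hull w N (w N)) by (intros N C _ _ Ht; apply Ht; lia).
  assert (Hinf : forall N, exists lam, (forall y, tail_hull w N y -> lam <= hinner y y) /\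
     (forall d, 0 < d -> exists y, tail_hull w N y /\ hinner y y < lam + d))
    by (intro N; exact (sq_norm_infimum _ _ (Hw N))).
  destruct (choice _ Hinf) as [lam Hlam].
  assert (Hnear : forall N, exists y, tail_hull w N y /\ hinner y y < lam N + / (INR N + 1)).
  { intro N. apply (proj2 (Hlam N)), Rinv_0_lt_compat. pose proof (pos_INR N). lra. }
  destruct (choice _ Hnear) as [y Hy].
  destruct (growing_cv lam) as [l Hl].
  { intro N. apply Rnot_lt_le. intro Hlt.
    destruct (proj2 (Hlam (S N)) (lam N - lam (S N))) as [z [Hz Hzl]]; [lra|].
    assert (tail_hull w N z) by (apply (tail_hull_antitone _ N (S N)); auto).
    pose proof (proj1 (Hlam N) z ltac:(assumption)). lra. }
  { exists M. intros r [N ->]. eapply Rle_trans; [apply (proj1 (Hlam N)), Hw | apply HM]. }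
  assert (Hpar : forall p q, (p <= q)%nat ->
     hinner (hsub (y p) (y q)) (hsub (y p) (y q)) <=
       2 * (lam q - lam p) + 2 * / (INR p + 1) + 2 * / (INR q + 1)).
  { intros p q Hpq. rewrite parallelogram.
    assert (Tm : tail_hull w p (hadd (hscal (/2) (y p)) (hscal (1 - /2) (y q)))).
    { apply tail_hull_convex; [lra | apply Hy | apply (tail_hull_antitone _ p q); auto; apply Hy]. }
    apply (proj1 (Hlam p)) in Tm. destruct (Hy p) as [_ Yp]. destruct (Hy q) as [_ Yq]. lra. }
  assert (Cauchy : forall e, e > 0 -> exists N, forall p q, (p >= N)%nat -> (q >= N)%nat ->
      hnorm (hsub (y p) (y q)) < e).
  { intros e He.
    destruct (Hl (e*e/16)) as [N1 HN1]; [nra|].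
    destruct (INR_inv_small (e*e/16)) as [N2 HN2]; [nra|].
    exists (N1 + N2)%nat. intros p q Hp Hq.
    rewrite <- (sqrt_square e) by lra. apply sqrt_lt_1_alt. split; [apply hinner_pos|].
    pose proof (HN1 p ltac:(lia)) as A1. pose proof (HN1 q ltac:(lia)) as A2.
    pose proof (HN2 p ltac:(lia)) as B1. pose proof (HN2 q ltac:(lia)) as B2.
    unfold R_dist in A1, A2. apply Rabs_def2 in A1. apply Rabs_def2 in A2.
    destruct (le_ge_dec p q) as [Hpq|Hpq].
    - pose proof (Hpar p q Hpq). lra.
    - pose proof (Hpar q p Hpq).
      replace (hinner (hsub (y p) (y q)) (hsub (y p) (y q)))
        with (hinner (hsub (y q) (y p)) (hsub (y q) (y p))) by (iexp; ring). lra. }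
  destruct (hcomplete y Cauchy) as [c Hc].
  exists c. intros C Cc Cv [N HN]. apply (Cc (fun k => y (k + N)%nat)).
  - intro k. apply (proj1 (Hy (k + N)%nat)); auto. intros n Hn. apply HN. lia.
  - exact (cv_shift (fun n => hnorm (hsub (y n) c)) 0 N Hc).
Qed.

End ConvexClusterPoint.

(** ** Forward-backward splitting in an abstract Hilbert space *)

Lemma not_weak_cv_subseq (K : Hilbert) (u : nat -> K) (c : K) :
  ~ weak_cv u c ->
  exists v dl (sg : nat -> nat), dl > 0 /\ forall k, (sg k >= k)%nat /\ dl <= hinner (u (sg k)) v - hinner c v.
Proof.
  intro Hnot.
  assert (Hinf : exists v dl, dl > 0 /\ forall N, exists n, (n >= N)%nat /\ dl <= Rabs (hinner (u n) v - hinner c v)).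
  { apply NNPP. intro H. apply Hnot. intros v e He. apply NNPP. intro H2. apply H. exists v, e. split; auto.
    intro N. apply NNPP. intro H3. apply H2. exists N. intros n Hn. unfold R_dist. apply Rnot_le_lt.
    intro H4. apply H3. exists n. split; auto. }
  destruct Hinf as [v [dl [Hdl Hinf]]].
  assert (Hsign : exists v', forall N, exists n, (n >= N)%nat /\ dl <= hinner (u n) v' - hinner c v').
  { destruct (classic (forall N, exists n, (n >= N)%nat /\ dl <= hinner (u n) v - hinner c v)) as [Hp|Hn].
    - exists v; auto.
    - exists (hopp v). apply not_all_ex_not in Hn. destruct Hn as [N1 HN1].
      intro N. destruct (Hinf (N + N1)%nat) as [n [Hn Habs]]. exists n. split; [lia|].
      rewrite !hinner_opp_r.
      assert (~ dl <= hinner (u n) v - hinner c v) by (intro; apply HN1; exists n; split; [lia|auto]).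
      revert Habs H. unfold Rabs; destruct Rcase_abs; intros; lra. }
  destruct Hsign as [v' Hv']. destruct (choice _ Hv') as [sg Hsg].
  exists v', dl, sg. auto.
Qed.

Lemma convex_cluster_subseq (K : Hilbert) (w : nat -> K) (sg : nat -> nat) c :
  (forall k, (sg k >= k)%nat) -> convex_cluster_point (fun k => w (sg k)) c -> convex_cluster_point w c.
Proof.
  intros Hsg Hc C Cc Cv [N HN]. apply Hc; auto. exists N. intros k Hk. apply HN. specialize (Hsg k). lia.
Qed.

Section ForwardBackward.
Variable K : Hilbert.
Variable f : K -> ER.
Hypothesis f_convex : forall x y t, 0 < t < 1 ->
  ERle (f (hadd (hscal t x) (hscal (1 - t) y))) (ERadd (ERscal t (f x)) (ERscal (1 - t) (f y))).
Hypothesis f_lsc : forall (r : R) (u : nat -> K) (x : K),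
  (forall n, ERle (f (u n)) (Fin r)) -> Un_cv (fun n => hnorm (hsub (u n) x)) 0 -> ERle (f x) (Fin r).

Definition subgradient (s u : K) : Prop :=
  f s <> PInf /\ forall y, ERle (ERadd (Fin (hinner (hsub y s) u)) (f s)) (f y).

Lemma subgradient_finite s u : subgradient s u ->
  exists fs, f s = Fin fs /\ forall q vq, f q = Fin vq -> hinner (hsub q s) u + fs <= vq.
Proof.
  intros [Hf Hy]. destruct (f s) as [fs|] eqn:E; [|congruence]. exists fs; split; auto.
  intros q vq Eq. specialize (Hy q). rewrite Eq in Hy. exact Hy.
Qed.

Definition tilted_sublevel (w : K) (r : R) : K -> Prop :=
  fun x => exists v, f x = Fin v /\ v + hinner x w <= r.

Lemma tilted_sublevel_closed w r : closed_set (tilted_sublevel w r).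
Proof.
  intros u x Hu Hc. pose proof (inner_cv _ u x w Hc) as Hi.
  assert (Hd : forall d, d > 0 -> exists v, f x = Fin v /\ v <= r - hinner x w + d).
  { intros d Hd. destruct (cv_eventually_gt _ _ (hinner x w - d) Hi) as [N HN]; [lra|].
    assert (Hle : ERle (f x) (Fin (r - hinner x w + d))).
    { apply (f_lsc _ (fun k => u (k + N)%nat)).
      - intro k. destruct (Hu (k + N)%nat) as [v [Ev Hv]]. rewrite Ev. simpl.
        specialize (HN (k + N)%nat ltac:(lia)). lra.
      - exact (cv_shift (fun n => hnorm (hsub (u n) x)) 0 N Hc). }
    destruct (f x) as [v|]; simpl in Hle; [exists v; auto | contradiction]. }
  destruct (Hd 1 ltac:(lra)) as [v [Ev _]]. exists v. split; auto.
  apply Rnot_lt_le. intro Hlt. destruct (Hd ((v - (r - hinner x w)) / 2)) as [v' [Ev' Hv']]; [lra|].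
  rewrite Ev in Ev'. injection Ev' as <-. lra.
Qed.

Lemma tilted_sublevel_convex w r : convex_set (tilted_sublevel w r).
Proof.
  intros x y t Ht [vx [Ex Hx]] [vy [Ey Hy]].
  destruct (Req_dec t 0) as [->|H0].
  { replace (hadd (hscal 0 x) (hscal (1 - 0) y)) with y by (apply eq_of_dist0; iexp; ring). exists vy; auto. }
  destruct (Req_dec t 1) as [->|H1].
  { replace (hadd (hscal 1 x) (hscal (1 - 1) y)) with x by (apply eq_of_dist0; iexp; ring). exists vx; auto. }
  pose proof (f_convex x y t ltac:(lra)) as C. rewrite Ex, Ey in C. simpl in C.
  destruct (f (hadd (hscal t x) (hscal (1 - t) y))) as [v|] eqn:Ev; simpl in C; [|contradiction].
  exists v. split; [exact Ev|]. iexp.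
  assert (t * (vx + hinner x w) <= t * r) by (apply Rmult_le_compat_l; lra).
  assert ((1 - t) * (vy + hinner y w) <= (1 - t) * r) by (apply Rmult_le_compat_l; lra).
  lra.
Qed.

Definition is_proxK (g : R) (y p : K) : Prop := forall q,
  ERle (ERadd (ERscal g (f p)) (Fin (/ 2 * hnorm (hsub y p) ^ 2)))
       (ERadd (ERscal g (f q)) (Fin (/ 2 * hnorm (hsub y q) ^ 2))).

(** Variational characterisation of the proximal point:
    g f(p) + <q - p, y - p> <= g f(q) for all q, obtained by comparing p with
    the points p + t (q - p) for small t > 0. *)
Lemma prox_variational g y p s fs : 0 < g -> is_proxK g y p -> f s = Fin fs ->
  exists vp, f p = Fin vp /\ forall q vq, f q = Fin vq -> g * vp + hinner (hsub q p) (hsub y p) <= g * vq.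
Proof.
  intros gpos Hp Hs.
  destruct (f p) as [vp|] eqn:Ep.
  2: { specialize (Hp s). rewrite Ep, Hs in Hp. simpl in Hp. contradiction. }
  exists vp; split; auto. intros q vq Eq.
  set (X := g * vp + hinner (hsub q p) (hsub y p) - g * vq).
  destruct (Rle_or_lt X 0); [unfold X in *; lra|exfalso].
  set (Nq := hinner (hsub q p) (hsub q p)).
  assert (HNq : 0 <= Nq) by apply hinner_pos.
  set (t := X / (2 * (Nq + X + 1))).
  assert (Ht : t * (2 * (Nq + X + 1)) = X) by (unfold t; field; lra).
  assert (tpos : 0 < t) by (unfold t; apply Rdiv_lt_0_compat; lra).
  assert (t1 : t < 1) by nra.
  pose proof (f_convex q p t ltac:(lra)) as C. rewrite Eq, Ep in C. simpl in C.
  destruct (f (hadd (hscal t q) (hscal (1 - t) p))) as [v|] eqn:Ev; simpl in C; [|contradiction].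
  specialize (Hp (hadd (hscal t q) (hscal (1 - t) p))). rewrite Ep, Ev in Hp. cbn [ERadd ERscal ERle] in Hp.
  rewrite !hnorm_sq in Hp.
  assert (C2 : g * v <= g * (t * vq + (1 - t) * vp)) by (apply Rmult_le_compat_l; lra).
  assert (KEY : t * X <= t * t / 2 * Nq).
  { unfold X, Nq. revert Hp. iexp. intro Hp. iexp. lra. }
  assert (X <= t / 2 * Nq) by (apply (Rmult_le_reg_l t); auto; lra).
  nra.
Qed.

(** The algorithm: B is kappa-cocoercive, the step sizes lie in
    [eps, (2 - eps) kappa], and the forward and backward steps are computed
    up to summable errors a_n and b_n:
      p_n = prox_(gam_n f) (x_n - gam_n (B x_n + a_n)),   x_(n+1) = p_n + b_n. *)
Variable B : K -> K.
Variable kappa : R.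
Hypothesis kappa_pos : 0 < kappa.
Hypothesis B_cocoercive : forall x y,
  kappa * hinner (hsub (B x) (B y)) (hsub (B x) (B y)) <= hinner (hsub x y) (hsub (B x) (B y)).
Variable eps : R.
Variable gam : nat -> R.
Hypothesis eps_pos : 0 < eps.
Hypothesis gam_range : forall n, eps <= gam n <= (2 - eps) * kappa.
Variables x a b : nat -> K.
Hypothesis a_summable : abs_summable a.
Hypothesis b_summable : abs_summable b.

Definition fb_arg n := hsub (x n) (hscal (gam n) (hadd (B (x n)) (a n))).
Definition fb_prox n := hsub (x (S n)) (b n).
Hypothesis fb_step : forall n, is_proxK (gam n) (fb_arg n) (fb_prox n).

Definition fb_solution s := subgradient s (hopp (B s)).

Lemma gam_pos n : 0 < gam n.
Proof. pose proof (gam_range n). lra. Qed.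

Lemma step_bound_pos : 0 < (2 - eps) * kappa.
Proof. pose proof (gam_range 0%nat). lra. Qed.

Definition fwd_dev s n :=
  hsub (hsub (hsub (x n) s) (hscal (gam n) (hsub (B (x n)) (B s)))) (hscal (gam n) (a n)).
Definition prox_dev s n := hsub (fb_prox n) s.

Lemma prox_step_firm n s : fb_solution s -> 0 <= hinner (prox_dev s n) (hsub (fwd_dev s n) (prox_dev s n)).
Proof.
  intros Hs. destruct (subgradient_finite _ _ Hs) as [fs [Es Hsr]].
  destruct (prox_variational (gam n) (fb_arg n) (fb_prox n) s fs (gam_pos n) (fb_step n) Es) as [vp [Ep Hq]].
  pose proof (Hq s fs Es) as A1. pose proof (Hsr (fb_prox n) vp Ep) as A2.
  assert (A3 : gam n * (hinner (hsub (fb_prox n) s) (hopp (B s)) + fs) <= gam n * vp)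
    by (apply Rmult_le_compat_l; [pose proof (gam_pos n); lra | exact A2]).
  unfold fb_arg in A1. unfold fwd_dev, prox_dev. set (g := gam n) in *. set (p := fb_prox n) in *.
  revert A1 A3. iexp. intros A1 A3. iexp. lra.
Qed.

Lemma forward_step_gain n s :
  let d := hsub (x n) s in let Dl := hsub (B (x n)) (B s) in
  hnorm (hsub d (hscal (gam n) Dl)) ^ 2 <= hnorm d ^ 2 - eps * eps * kappa * hinner Dl Dl.
Proof.
  intros d Dl. pose proof (gam_pos n). pose proof (gam_range n).
  rewrite !hnorm_sq. pose proof (B_cocoercive (x n) s) as Co. fold d Dl in Co.
  assert (gam n * (kappa * hinner Dl Dl) <= gam n * hinner d Dl) by (apply Rmult_le_compat_l; lra).
  pose proof (hinner_pos Dl).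
  assert (eps * (eps * kappa) <= gam n * (2 * kappa - gam n)) by (apply Rmult_le_compat; nra).
  assert (eps * (eps * kappa) * hinner Dl Dl <= gam n * (2 * kappa - gam n) * hinner Dl Dl)
    by (apply Rmult_le_compat_r; lra).
  iexp. rewrite (hinner_sym Dl d). lra.
Qed.

Lemma step_norm_facts n s : fb_solution s ->
  let D := hnorm (hsub (hsub (x n) s) (hscal (gam n) (hsub (B (x n)) (B s)))) in
  hnorm (fwd_dev s n) <= D + (2 - eps) * kappa * hnorm (a n) /\
  hnorm (prox_dev s n) <= hnorm (fwd_dev s n) /\
  hnorm (hsub (x (S n)) s) <= hnorm (prox_dev s n) + hnorm (b n) /\
  hinner (hsub (fwd_dev s n) (prox_dev s n)) (hsub (fwd_dev s n) (prox_dev s n))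
    <= hnorm (fwd_dev s n) * hnorm (fwd_dev s n) - hnorm (prox_dev s n) * hnorm (prox_dev s n).
Proof.
  intros Hs D. pose proof (prox_step_firm n s Hs) as St. pose proof (gam_range n). pose proof (gam_pos n).
  rewrite !hnorm_mul_self. split; [|split; [|split]].
  - unfold fwd_dev. eapply Rle_trans; [apply hnorm_triangle_sub|]. rewrite hnorm_scal.
    rewrite Rabs_right by lra. pose proof (hnorm_pos (a n)). fold D. nra.
  - pose proof (hnorm_pos (prox_dev s n)). pose proof (hnorm_pos (fwd_dev s n)).
    pose proof (cauchy_schwarz (prox_dev s n) (fwd_dev s n)).
    assert (hinner (prox_dev s n) (prox_dev s n) <= hinner (prox_dev s n) (fwd_dev s n))
      by (revert St; iexp; intro; lra).
    rewrite <- hnorm_mul_self in *. nra.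
  - replace (hsub (x (S n)) s) with (hadd (prox_dev s n) (b n)) by
      (apply eq_of_dist0; unfold prox_dev, fb_prox; iexp; ring).
    apply hnorm_triangle.
  - revert St. iexp. intro. lra.
Qed.

Definition err n := (2 - eps) * kappa * hnorm (a n) + hnorm (b n).

Lemma err_summable : (forall n, 0 <= err n) /\ (exists E, forall N, sum_f_R0 err N <= E).
Proof.
  destruct a_summable as [A HA]. destruct b_summable as [Bb HB]. pose proof step_bound_pos.
  split.
  - intro n. unfold err. pose proof (hnorm_pos (a n)). pose proof (hnorm_pos (b n)). nra.
  - exists ((2 - eps) * kappa * A + Bb). intro N.
    assert (Hlin : forall c (e1 e2 : nat -> R) N, sum_f_R0 (fun n => c * e1 n + e2 n) N = c * sum_f_R0 e1 N + sum_f_R0 e2 N)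
      by (induction N0; simpl; [ring | rewrite IHN0; ring]).
    unfold err. rewrite (Hlin _ (fun n => hnorm (a n)) (fun n => hnorm (b n))).
    specialize (HA N). specialize (HB N). nra.
Qed.

Lemma err_cv0 : Un_cv err 0.
Proof. destruct err_summable as [P [E HE]]. exact (summable_cv0 _ _ P HE). Qed.

Lemma a_cv0 : Un_cv (fun n => hnorm (a n)) 0.
Proof. destruct a_summable as [A HA]. apply (summable_cv0 _ A); auto. intro; apply hnorm_pos. Qed.

Lemma dist_step s n : fb_solution s -> hnorm (hsub (x (S n)) s) <= hnorm (hsub (x n) s) + err n.
Proof.
  intros Hs. pose proof (forward_step_gain n s) as G. destruct (step_norm_facts n s Hs) as [F2 [F3 [F4 _]]].
  simpl in G. set (D := hnorm (hsub (hsub (x n) s) (hscal (gam n) (hsub (B (x n)) (B s))))) in *.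
  assert (D <= hnorm (hsub (x n) s)).
  { pose proof (hnorm_pos (hsub (x n) s)). assert (0 <= D) by apply hnorm_pos.
    pose proof (hinner_pos (hsub (B (x n)) (B s))).
    assert (0 <= eps * eps * kappa * hinner (hsub (B (x n)) (B s)) (hsub (B (x n)) (B s)))
      by (apply Rmult_le_pos; nra).
    nra. }
  unfold err. lra.
Qed.

Lemma dist_cv s : fb_solution s -> exists l, Un_cv (fun n => hnorm (hsub (x n) s)) l.
Proof.
  intros Hs. destruct err_summable as [P [E HE]].
  apply (quasi_fejer_cv _ err E P HE); [intro; apply hnorm_pos | intro n; apply dist_step, Hs].
Qed.

Variable z : K.
Hypothesis z_solution : fb_solution z.

Lemma dist_bounded : exists M, 0 <= M /\ forall n, hnorm (hsub (x n) z) <= M.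
Proof.
  destruct (dist_cv z z_solution) as [l Hl]. destruct (cv_bounded _ _ Hl) as [M [M0 HM]].
  exists M. split; auto. intro n. specialize (HM n). pose proof (RRle_abs (hnorm (hsub (x n) z))). lra.
Qed.

(** Summing the one-step energy estimate: the forward residual B x_n - B z
    and the backward residual fwd_dev - prox_dev both vanish, since the
    squared distances to z converge and the errors vanish. *)
Lemma residuals_cv0 :
  Un_cv (fun n => hinner (hsub (B (x n)) (B z)) (hsub (B (x n)) (B z))) 0 /\
  Un_cv (fun n => hinner (hsub (fwd_dev z n) (prox_dev z n)) (hsub (fwd_dev z n) (prox_dev z n))) 0.
Proof.
  destruct (dist_cv z z_solution) as [l Hl]. destruct dist_bounded as [M [M0 HM]].
  destruct err_summable as [Pe _].
  set (r := fun n => hnorm (hsub (x n) z)) in *.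
  set (W := fun n => r n * r n - r (S n) * r (S n) + 4 * M * err n + 2 * (err n * err n)).
  assert (HW : Un_cv W 0).
  { replace 0 with (l * l - l * l + 4 * M * 0 + 2 * (0 * 0)) by ring.
    pose proof (cv_reindex r l S ltac:(intro; lia) Hl) as Hl1. pose proof err_cv0.
    apply CV_plus; [apply CV_plus; [apply CV_minus|]|].
    - apply CV_mult; assumption.
    - apply CV_mult; assumption.
    - apply CV_mult; [apply cv_const | assumption].
    - apply CV_mult; [apply cv_const | apply CV_mult; assumption]. }
  assert (Hpos : 0 < eps * eps * kappa) by (apply Rmult_lt_0_compat; nra).
  assert (Henergy : forall n,
     eps * eps * kappa * hinner (hsub (B (x n)) (B z)) (hsub (B (x n)) (B z)) <= W n /\
     hinner (hsub (fwd_dev z n) (prox_dev z n)) (hsub (fwd_dev z n) (prox_dev z n)) <= W n).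
  { intro n. pose proof (forward_step_gain n z) as G. cbv zeta in G. rewrite !hnorm_sq in G.
    destruct (step_norm_facts n z z_solution) as [F2 [F3 [F4 F5]]].
    pose proof (hinner_pos (hsub (B (x n)) (B z))). pose proof step_bound_pos.
    pose proof (hnorm_pos (a n)).
    destruct (fejer_energy_bound (r n) (r (S n))
      (hnorm (hsub (hsub (x n) z) (hscal (gam n) (hsub (B (x n)) (B z)))))
      (eps * eps * kappa * hinner (hsub (B (x n)) (B z)) (hsub (B (x n)) (B z)))
      (hnorm (fwd_dev z n)) (hnorm (prox_dev z n)) ((2 - eps) * kappa * hnorm (a n)) (hnorm (b n)) M)
      as [E1 E2]; unfold r; rewrite ?hnorm_mul_self;
      try solve [apply hnorm_pos | apply Rmult_le_pos; nra | split; [apply hnorm_pos | apply HM] | lra].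
    split; unfold W, err; lra. }
  split.
  - apply (squeeze0 _ (fun n => / (eps * eps * kappa) * W n)); [intro; apply hinner_pos| |apply cv_scal0, HW].
    intro n. apply (Rmult_le_reg_l (eps * eps * kappa)); auto.
    rewrite <- Rmult_assoc, Rinv_r, Rmult_1_l by lra. apply Henergy.
  - apply (squeeze0 _ W); [intro; apply hinner_pos | apply Henergy | exact HW].
Qed.

Lemma B_residual_cv0 : Un_cv (fun n => hnorm (hsub (B (x n)) (B z))) 0.
Proof. apply sqrt_cv_of_cv; [intro; apply hinner_pos | apply residuals_cv0]. Qed.

Lemma prox_gap_cv0 : Un_cv (fun n => hnorm (hsub (x n) (fb_prox n))) 0.
Proof.
  assert (Hres : Un_cv (fun n => hnorm (hsub (fwd_dev z n) (prox_dev z n))) 0)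
    by (apply sqrt_cv_of_cv; [intro; apply hinner_pos | apply residuals_cv0]).
  set (c := (2 - eps) * kappa).
  apply (squeeze0 _ (fun n => hnorm (hsub (fwd_dev z n) (prox_dev z n)) +
      (c * hnorm (hsub (B (x n)) (B z)) + c * hnorm (a n)))); [intro; apply hnorm_pos| |].
  - intro n.
    replace (hsub (x n) (fb_prox n)) with (hadd (hadd (hsub (fwd_dev z n) (prox_dev z n))
        (hscal (gam n) (hsub (B (x n)) (B z)))) (hscal (gam n) (a n)))
      by (apply eq_of_dist0; unfold fwd_dev, prox_dev; iexp; ring).
    eapply Rle_trans; [apply hnorm_triangle|]. eapply Rle_trans; [apply Rplus_le_compat_r, hnorm_triangle|].
    rewrite !hnorm_scal, Rabs_right by (pose proof (gam_pos n); lra).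
    pose proof (gam_range n). pose proof (hnorm_pos (a n)). pose proof (hnorm_pos (hsub (B (x n)) (B z))).
    assert (gam n * hnorm (hsub (B (x n)) (B z)) <= c * hnorm (hsub (B (x n)) (B z)))
      by (apply Rmult_le_compat_r; unfold c; lra).
    assert (gam n * hnorm (a n) <= c * hnorm (a n)) by (apply Rmult_le_compat_r; unfold c; lra).
    lra.
  - apply cv_plus0; [exact Hres|]. apply cv_plus0; apply cv_scal0; [apply B_residual_cv0 | apply a_cv0].
Qed.

Lemma iterates_bounded : exists X P, 0 <= X /\ 0 <= P /\
  (forall n, hnorm (x n) <= X) /\ (forall n, hnorm (fb_prox n) <= P).
Proof.
  destruct dist_bounded as [M [M0 HM]].
  destruct (cv_bounded _ _ prox_gap_cv0) as [Q [Q0 HQ]].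
  pose proof (hnorm_pos z).
  assert (Hx : forall n, hnorm (x n) <= M + hnorm z).
  { intro n. replace (x n) with (hadd (hsub (x n) z) z) by (apply eq_of_dist0; iexp; ring).
    eapply Rle_trans; [apply hnorm_triangle|]. specialize (HM n). lra. }
  exists (M + hnorm z), (Q + M + hnorm z). split; [lra|]. split; [lra|]. split; auto.
  intro n. replace (fb_prox n) with (hsub (x n) (hsub (x n) (fb_prox n))) by (apply eq_of_dist0; iexp; ring).
  eapply Rle_trans; [apply hnorm_triangle_sub|]. specialize (Hx n). specialize (HQ n).
  pose proof (RRle_abs (hnorm (hsub (x n) (fb_prox n)))). lra.
Qed.

(** Every convex cluster point c of the proximal points has B c = B z: by
    cocoercivity, <p_n - c, B z - B c> >= kappa ||B z - B c||^2 - o(1), and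
    this inequality passes to c through a half-space. *)
Lemma cluster_B_eq c : convex_cluster_point fb_prox c -> B c = B z.
Proof.
  intro Hc. destruct iterates_bounded as [X [P [X0 [P0 [HX HP]]]]].
  set (Dc := hsub (B z) (B c)).
  assert (Herr : Un_cv (fun n => 2 * kappa * hnorm Dc * hnorm (hsub (B (x n)) (B z)) +
     (X + hnorm c) * hnorm (hsub (B (x n)) (B z)) + hnorm Dc * hnorm (hsub (x n) (fb_prox n))) 0)
    by (apply cv_plus0; [apply cv_plus0|]; apply cv_scal0; [apply B_residual_cv0 | apply B_residual_cv0 | apply prox_gap_cv0]).
  assert (Hle : kappa * hinner Dc Dc <= 0).
  { apply Rnot_lt_le. intro Hpos. set (d := kappa * hinner Dc Dc / 2).
    destruct (cv_eventually_lt _ _ d Herr) as [N HN]; [unfold d; lra|].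
    assert (Hhs : kappa * hinner Dc Dc - d + hinner c Dc <= hinner c Dc); [|unfold d in Hhs; lra].
    apply convex_cluster_halfspace with (w := fb_prox); auto. exists N. intros n Hn. specialize (HN n Hn).
    set (Dl := hsub (B (x n)) (B z)) in *.
    pose proof (B_cocoercive (x n) c) as Co.
    pose proof (cauchy_schwarz_bounds Dl Dc) as C1.
    pose proof (cauchy_schwarz_bounds (hsub (x n) c) Dl) as C2.
    pose proof (cauchy_schwarz_bounds (hsub (x n) (fb_prox n)) Dc) as C3.
    assert (hnorm (hsub (x n) c) <= X + hnorm c) by (eapply Rle_trans; [apply hnorm_triangle_sub | specialize (HX n); lra]).
    assert (hnorm (hsub (x n) c) * hnorm Dl <= (X + hnorm c) * hnorm Dl) by (apply Rmult_le_compat_r; auto; apply hnorm_pos).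
    assert (I1 : hinner (fb_prox n) Dc - hinner c Dc = hinner (hsub (x n) c) (hsub (B (x n)) (B c))
        - hinner (hsub (x n) c) Dl - hinner (hsub (x n) (fb_prox n)) Dc) by (unfold Dc, Dl; iexp; ring).
    assert (I2 : hinner (hsub (B (x n)) (B c)) (hsub (B (x n)) (B c)) = hinner Dl Dl + 2 * hinner Dl Dc + hinner Dc Dc)
      by (unfold Dc, Dl; iexp; ring).
    pose proof (hinner_pos Dl).
    assert (kappa * (- (hnorm Dl * hnorm Dc)) <= kappa * hinner Dl Dc) by (apply Rmult_le_compat_l; lra).
    assert (0 <= kappa * hinner Dl Dl) by (apply Rmult_le_pos; lra).
    rewrite I2 in Co. lra. }
  symmetry. apply eq_of_dist0. fold Dc. pose proof (hinner_pos Dc).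
  assert (E0 : kappa * hinner Dc Dc = 0) by (pose proof (Rmult_le_pos kappa _ (Rlt_le _ _ kappa_pos) H); lra).
  apply Rmult_integral in E0. destruct E0; lra.
Qed.

(** Every convex cluster point c of the proximal points minimises
    f + <., B z>: the proximal inequality at p_n gives
    f(p_n) + <p_n, B z> <= f(q) + <q, B z> + o(1), and this passes to c
    through the closed convex sublevel sets of f + <., B z>. *)
Lemma cluster_minimizes c : convex_cluster_point fb_prox c ->
  exists fc, f c = Fin fc /\ forall q vq, f q = Fin vq -> fc + hinner c (B z) <= vq + hinner q (B z).
Proof.
  intro Hc. destruct iterates_bounded as [X [P [X0 [P0 [HX HP]]]]].
  destruct (subgradient_finite _ _ z_solution) as [fz [Ez _]].
  assert (Hres : Un_cv (fun n => hnorm (hsub (fwd_dev z n) (prox_dev z n))) 0)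
    by (apply sqrt_cv_of_cv; [intro; apply hinner_pos | apply residuals_cv0]).
  assert (Happrox : forall q vq, f q = Fin vq -> forall dl, dl > 0 ->
     tilted_sublevel (B z) (vq + hinner q (B z) + dl) c).
  { intros q vq Eq dl Hdl.
    destruct (cv_eventually_lt _ _ dl (cv_scal0 _ (/ eps * (hnorm q + P)) Hres) Hdl) as [N HN].
    apply Hc; [apply tilted_sublevel_closed | apply tilted_sublevel_convex|]. exists N. intros n Hn. specialize (HN n Hn).
    destruct (prox_variational (gam n) (fb_arg n) (fb_prox n) z fz (gam_pos n) (fb_step n) Ez) as [vp [Ep Hq]].
    exists vp. split; auto. specialize (Hq q vq Eq).
    set (ev := hsub (fwd_dev z n) (prox_dev z n)) in *.
    assert (I : hinner (hsub q (fb_prox n)) (hsub (fb_arg n) (fb_prox n)) =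
        hinner (hsub q (fb_prox n)) ev - gam n * (hinner q (B z) - hinner (fb_prox n) (B z)))
      by (unfold ev, fb_arg, fwd_dev, prox_dev; iexp; ring).
    pose proof (cauchy_schwarz_bounds (hsub q (fb_prox n)) ev) as C1.
    assert (hnorm (hsub q (fb_prox n)) <= hnorm q + P) by (eapply Rle_trans; [apply hnorm_triangle_sub | specialize (HP n); lra]).
    assert (hnorm (hsub q (fb_prox n)) * hnorm ev <= (hnorm q + P) * hnorm ev)
      by (apply Rmult_le_compat_r; auto; apply hnorm_pos).
    set (t := vp + hinner (fb_prox n) (B z) - (vq + hinner q (B z))).
    assert (gam n * t <= (hnorm q + P) * hnorm ev) by (unfold t; rewrite I in Hq; lra).
    destruct (Rle_or_lt t 0); [unfold t in *; lra|].
    assert (eps * t <= gam n * t) by (apply Rmult_le_compat_r; [lra | apply gam_range]).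
    assert (t <= / eps * (hnorm q + P) * hnorm ev) by (apply (Rmult_le_reg_l eps); auto; field_simplify; lra).
    unfold t in *. lra. }
  destruct (Happrox z fz Ez 1 ltac:(lra)) as [fc [Ec _]]. exists fc. split; auto.
  intros q vq Eq. apply Rnot_lt_le. intro Hlt.
  destruct (Happrox q vq Eq ((fc + hinner c (B z) - (vq + hinner q (B z))) / 2)) as [fc' [Ec' H']]; [lra|].
  rewrite Ec in Ec'. injection Ec' as <-. lra.
Qed.

Lemma cluster_solution c : convex_cluster_point fb_prox c -> fb_solution c.
Proof.
  intro Hc. pose proof (cluster_B_eq c Hc) as HB. destruct (cluster_minimizes c Hc) as [fc [Ec Hmin]].
  split; [rewrite Ec; discriminate|].
  intro y. rewrite Ec, HB. destruct (f y) as [vy|] eqn:Ey; [|exact I].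
  specialize (Hmin y vy Ey). simpl. iexp. lra.
Qed.

(** For two solutions s1, s2 the sequence <x_n, s1 - s2> converges, since
    2 <x_n, s1 - s2> = ||x_n - s2||^2 - ||x_n - s1||^2 + ||s1||^2 - ||s2||^2. *)
Lemma solutions_inner_cv s1 s2 : fb_solution s1 -> fb_solution s2 ->
  exists l, Un_cv (fun n => hinner (x n) (hsub s1 s2)) l.
Proof.
  intros S1 S2. destruct (dist_cv s1 S1) as [l1 H1]. destruct (dist_cv s2 S2) as [l2 H2].
  set (r1 := fun n => hnorm (hsub (x n) s1)) in *. set (r2 := fun n => hnorm (hsub (x n) s2)) in *.
  exists (/2 * (l2 * l2 - l1 * l1 + hinner s1 s1 - hinner s2 s2)).
  apply Un_cv_ext with (fun n => /2 * (r2 n * r2 n - r1 n * r1 n + hinner s1 s1 - hinner s2 s2)).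
  - intro n. unfold r1, r2. rewrite !hnorm_mul_self. iexp. lra.
  - apply CV_mult; [apply cv_const|]. apply CV_minus; [apply CV_plus; [apply CV_minus|]|];
      try apply CV_mult; try apply cv_const; assumption.
Qed.

Lemma cluster_unique c0 c1 : convex_cluster_point fb_prox c0 -> convex_cluster_point fb_prox c1 -> c1 = c0.
Proof.
  intros H0 H1.
  destruct (solutions_inner_cv c1 c0 (cluster_solution c1 H1) (cluster_solution c0 H0)) as [l Hl].
  assert (Hp : Un_cv (fun n => hinner (fb_prox n) (hsub c1 c0)) l).
  { replace l with (l - 0) by ring. eapply Un_cv_ext.
    2: { apply CV_minus; [exact Hl | exact (inner_null _ _ (hsub c1 c0) prox_gap_cv0)]. }
    intro n. cbv beta. iexp. ring. }
  apply eq_of_dist0. rewrite hinner_sub_l.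
  rewrite (convex_cluster_inner_limit _ _ c1 _ _ H1 Hp), (convex_cluster_inner_limit _ _ c0 _ _ H0 Hp). ring.
Qed.

Theorem forward_backward_cv : exists c, fb_solution c /\ weak_cv x c /\
  Un_cv (fun n => hnorm (hsub (B (x n)) (B c))) 0.
Proof.
  destruct iterates_bounded as [X [P [X0 [P0 [HX HP]]]]].
  assert (Pb : forall n, hinner (fb_prox n) (fb_prox n) <= P * P)
    by (intro n; rewrite <- hnorm_mul_self; pose proof (hnorm_pos (fb_prox n)); specialize (HP n); nra).
  destruct (bounded_convex_cluster_point K fb_prox (P * P) Pb) as [c Hc].
  exists c. split; [apply cluster_solution, Hc|]. split; [|rewrite (cluster_B_eq c Hc); apply B_residual_cv0].
  apply NNPP. intro Hnot. destruct (not_weak_cv_subseq K x c Hnot) as [v [dl [sg [Hdl Hsg]]]].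
  assert (Hsg1 : forall k, (sg k >= k)%nat) by (intro k; apply Hsg).
  destruct (bounded_convex_cluster_point K (fun k => fb_prox (sg k)) (P * P) (fun k => Pb (sg k))) as [c1 Hc1].
  assert (Ec : c1 = c) by exact (cluster_unique c c1 Hc (convex_cluster_subseq _ _ _ _ Hsg1 Hc1)).
  assert (Hfar : dl / 2 + hinner c v <= hinner c1 v); [|rewrite Ec in Hfar; lra].
  apply convex_cluster_halfspace with (w := fun k => fb_prox (sg k)); auto.
  pose proof (cv_reindex _ _ sg Hsg1 (inner_null _ _ v prox_gap_cv0)) as Hgap.
  destruct (cv_eventually_lt _ _ (dl / 2) Hgap) as [N HN]; [lra|].
  exists N. intros k Hk. specialize (HN k Hk). destruct (Hsg k) as [_ Hk2].
  cbv beta in HN. rewrite hinner_sub_l in HN. lra.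
Qed.

End ForwardBackward.

(** ** Finite sums over the index set of the direct sum *)

(** Sums over a list of natural numbers; [sumIdx] is such a sum over
    [seq 0 m] (extended by 0 outside the index range). *)
Definition lsum (l : list nat) (F : nat -> R) := fold_right Rplus 0 (map F l).

Lemma lsum_plus l F G : lsum l (fun k => F k + G k) = lsum l F + lsum l G.
Proof. induction l; unfold lsum in *; simpl; [ring|]. rewrite IHl. ring. Qed.

Lemma lsum_scal l F c : lsum l (fun k => c * F k) = c * lsum l F.
Proof. induction l; unfold lsum in *; simpl; [ring|]. rewrite IHl. ring. Qed.

Lemma lsum_le l F G : (forall k, F k <= G k) -> lsum l F <= lsum l G.
Proof. intros H. induction l; unfold lsum in *; simpl; [lra|]. specialize (H a). lra. Qed.

Lemma lsum_ext_in l F G : (forall k, In k l -> F k = G k) -> lsum l F = lsum l G.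
Proof. intros H. unfold lsum. f_equal. apply map_ext_in. auto. Qed.

Lemma lsum_zero_notin l F k0 : ~ In k0 l -> (forall k, k <> k0 -> F k = 0) -> lsum l F = 0.
Proof.
  intros Hn H. induction l; unfold lsum in *; simpl; [ring|].
  rewrite H. rewrite IHl. ring. intro; apply Hn; simpl; auto. intro; subst; apply Hn; simpl; auto.
Qed.

Lemma lsum_single l F k0 : In k0 l -> NoDup l -> (forall k, k <> k0 -> F k = 0) -> lsum l F = F k0.
Proof.
  intros Hi Hd H. induction l as [|a l IH]; [destruct Hi|]. inversion Hd; subst.
  unfold lsum; simpl. fold (lsum l F). destruct (Nat.eq_dec a k0).
  - subst. rewrite (lsum_zero_notin l F k0); auto. ring.
  - rewrite H by auto. destruct Hi; [congruence|]. rewrite IH; auto. ring.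
Qed.

Lemma lsum_cv l (F : nat -> nat -> R) : (forall k, Un_cv (fun n => F n k) 0) -> Un_cv (fun n => lsum l (F n)) 0.
Proof.
  intros H. induction l; unfold lsum in *; simpl. apply cv_const. apply cv_plus0; auto.
Qed.

Lemma lsum_sqrt l F : (forall k, 0 <= F k) -> sqrt (lsum l F) <= lsum l (fun k => sqrt (F k)).
Proof.
  intros P. induction l; unfold lsum in *; simpl. rewrite sqrt_0; lra.
  assert (0 <= fold_right Rplus 0 (map F l)).
  { clear IHl. induction l; simpl. lra. specialize (P a0). lra. }
  eapply Rle_trans. 2: apply Rplus_le_compat_l; exact IHl.
  specialize (P a).
  apply Rsqr_incr_0_var. unfold Rsqr. rewrite sqrt_sqrt by lra.
  pose proof (sqrt_sqrt (F a) P). pose proof (sqrt_sqrt _ H). pose proof (sqrt_pos (F a)).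
  pose proof (sqrt_pos (fold_right Rplus 0 (map F l))). nra.
  pose proof (sqrt_pos (F a)). pose proof (sqrt_pos (fold_right Rplus 0 (map F l))). lra.
Qed.

Lemma lsum_sum_f l (F : nat -> nat -> R) N : sum_f_R0 (fun n => lsum l (F n)) N = lsum l (fun k => sum_f_R0 (fun n => F n k) N).
Proof.
  induction N; simpl. reflexivity. rewrite IHN. rewrite <- lsum_plus. reflexivity.
Qed.

Lemma fold_max_ge l x0 : In x0 l -> x0 <= fold_right Rmax 0 l.
Proof. induction l; simpl; intros H; [destruct H|]. destruct H. subst. apply Rmax_l. eapply Rle_trans. apply IHl; auto. apply Rmax_r. Qed.

Lemma lsum_cyc n F : lsum (seq 0 (S n)) (fun k => if Nat.eq_dec k n then F 0%nat else F (S k)) = lsum (seq 0 (S n)) F.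
Proof.
  change (lsum (seq 0 (S n)) F) with (F 0%nat + lsum (seq 1 n) F).
  rewrite seq_S. unfold lsum. rewrite map_app, fold_right_app. simpl. destruct (Nat.eq_dec n n); [|congruence].
  rewrite (map_ext_in _ (fun k => F (S k))).
  2: { intros k Hk. apply in_seq in Hk. destruct Nat.eq_dec; [lia|auto]. }
  rewrite <- seq_shift, map_map.
  generalize (seq 0 n). induction l; simpl. ring. rewrite IHl. ring.
Qed.

Section SumIdx.
Variable m : nat.
Implicit Types g : Idx m -> R.

Definition gext (g : Idx m -> R) (k : nat) : R :=
  match lt_dec k m with left p => g (exist _ k p) | right _ => 0 end.

Lemma sumIdx_lsum g : sumIdx g = lsum (seq 0 m) (gext g).
Proof. reflexivity. Qed.

Lemma Idx_pi k (p1 p2 : (k < m)%nat) : (exist (fun i => (i < m)%nat) k p1 : Idx m) = exist _ k p2.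
Proof. unfold Idx. f_equal. apply Peano_dec.le_unique. Qed.

Lemma gext_val g (i : Idx m) : gext g (proj1_sig i) = g i.
Proof. destruct i as [k p]. unfold gext. simpl. destruct (lt_dec k m). rewrite (Idx_pi k l p). auto. contradiction. Qed.

Lemma sumIdx_plus (g1 g2 : Idx m -> R) : sumIdx (fun i => g1 i + g2 i) = sumIdx g1 + sumIdx g2.
Proof. rewrite !sumIdx_lsum, <- lsum_plus. apply lsum_ext_in. intros k _. unfold gext. destruct lt_dec; ring. Qed.

Lemma sumIdx_scal g c : sumIdx (fun i => c * g i) = c * sumIdx g.
Proof. rewrite !sumIdx_lsum, <- lsum_scal. apply lsum_ext_in. intros k _. unfold gext. destruct lt_dec; ring. Qed.

Lemma sumIdx_le (g1 g2 : Idx m -> R) : (forall i, g1 i <= g2 i) -> sumIdx g1 <= sumIdx g2.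
Proof. intros H. rewrite !sumIdx_lsum. apply lsum_le. intro k. unfold gext. destruct lt_dec; auto. lra. Qed.

Lemma sumIdx_ext (g1 g2 : Idx m -> R) : (forall i, g1 i = g2 i) -> sumIdx g1 = sumIdx g2.
Proof. intros H. f_equal. apply functional_extensionality. auto. Qed.

Lemma sumIdx_single g i : (forall j, j <> i -> g j = 0) -> sumIdx g = g i.
Proof.
  intros H. rewrite sumIdx_lsum. rewrite (lsum_single _ _ (proj1_sig i)).
  apply gext_val. apply in_seq. destruct i; simpl; lia. apply seq_NoDup.
  intros k Hk. unfold gext. destruct lt_dec; auto. apply H. intro E. apply Hk. rewrite <- E. reflexivity.
Qed.

Lemma sumIdx_nonneg g : (forall i, 0 <= g i) -> 0 <= sumIdx g.
Proof.
  intros H. assert (E : sumIdx (fun i => 0 * g i) = 0) by (rewrite sumIdx_scal; ring).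
  rewrite <- E. apply sumIdx_le. intro i. specialize (H i). lra.
Qed.

Lemma sumIdx_ge_term g i : (forall j, 0 <= g j) -> g i <= sumIdx g.
Proof.
  intros H. apply Rle_trans with (sumIdx (fun j => if Idx_eq_dec i j then g j else 0)).
  - rewrite (sumIdx_single _ i). destruct (Idx_eq_dec i i); [lra|congruence].
    intros j Hj. destruct Idx_eq_dec; auto. congruence.
  - apply sumIdx_le. intro j. destruct Idx_eq_dec; auto. lra.
Qed.

Lemma sumIdx_cv (g : nat -> Idx m -> R) : (forall i, Un_cv (fun n => g n i) 0) -> Un_cv (fun n => sumIdx (g n)) 0.
Proof.
  intros H. apply (lsum_cv _ (fun n => gext (g n))). intro k. unfold gext. destruct lt_dec. apply H. apply cv_const.
Qed.

Lemma sumIdx_sqrt g : (forall i, 0 <= g i) -> sqrt (sumIdx g) <= sumIdx (fun i => sqrt (g i)).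
Proof.
  intros P. rewrite !sumIdx_lsum. eapply Rle_trans. apply lsum_sqrt. intro k; unfold gext; destruct lt_dec; auto; lra.
  apply lsum_le. intro k. unfold gext. destruct lt_dec; [lra | rewrite sqrt_0; lra].
Qed.

Lemma sumIdx_sum_f (g : nat -> Idx m -> R) N : sum_f_R0 (fun n => sumIdx (g n)) N = sumIdx (fun i => sum_f_R0 (fun n => g n i) N).
Proof.
  rewrite sumIdx_lsum. rewrite <- (lsum_ext_in _ (fun k => sum_f_R0 (fun n => gext (g n) k) N)).
  apply (lsum_sum_f _ (fun n => gext (g n))).
  intros k _. unfold gext. destruct lt_dec; auto. clear. induction N; simpl; auto. rewrite IHN; ring.
Qed.

Lemma sumIdx_cyc g : (1 <= m)%nat -> sumIdx (fun i => g (next i)) = sumIdx g.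
Proof.
  intros Hm. rewrite !sumIdx_lsum.
  rewrite (lsum_ext_in _ _ (fun k => gext g (S k mod m))).
  2: { intros k Hk. apply in_seq in Hk. unfold gext. destruct (lt_dec k m); [|lia].
       destruct (lt_dec (S k mod m) m). f_equal. unfold next. simpl. apply Idx_pi.
       exfalso. apply n. apply Nat.mod_upper_bound. lia. }
  rewrite (lsum_ext_in _ _ (fun k => if Nat.eq_dec k (m-1) then gext g 0 else gext g (S k))).
  2: { intros k Hk. apply in_seq in Hk. destruct Nat.eq_dec. subst k. replace (S (m-1)) with m by lia.
       rewrite Nat.Div0.mod_same. auto. rewrite Nat.mod_small by lia. auto. }
  replace (seq 0 m) with (seq 0 (S (m-1))) by (f_equal; lia).
  apply (lsum_cyc (m-1) (gext g)).
Qed.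

Lemma maxIdx_ge g i : g i <= maxIdx g.
Proof.
  unfold maxIdx. rewrite <- (gext_val g i). apply fold_max_ge. apply in_map. apply in_seq. destruct i; simpl; lia.
Qed.

End SumIdx.

(** ** The direct sum H_1 (+) ... (+) H_m as a Hilbert space *)

Section ProdH.
Variable m : nat.
Variable H : Idx m -> Hilbert.

Lemma pr_assoc (x y z : Prod H) : padd x (padd y z) = padd (padd x y) z.
Proof. apply functional_extensionality_dep. intro i. apply hadd_assoc. Qed.

Lemma pr_comm (x y : Prod H) : padd x y = padd y x.
Proof. apply functional_extensionality_dep. intro i. apply hadd_comm. Qed.

Lemma pr_0 (x : Prod H) : padd (fun i => hzero) x = x.
Proof. apply functional_extensionality_dep. intro i. apply hadd_0. Qed.

Lemma pr_opp (x : Prod H) : padd x (fun i => hopp (x i)) = (fun i => hzero).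
Proof. apply functional_extensionality_dep. intro i. apply hadd_opp. Qed.

Lemma pr_sassoc a b (x : Prod H) : pscal a (pscal b x) = pscal (a * b) x.
Proof. apply functional_extensionality_dep. intro i. apply hscal_assoc. Qed.

Lemma pr_s1 (x : Prod H) : pscal 1 x = x.
Proof. apply functional_extensionality_dep. intro i. apply hscal_1. Qed.

Lemma pr_dv a (x y : Prod H) : pscal a (padd x y) = padd (pscal a x) (pscal a y).
Proof. apply functional_extensionality_dep. intro i. apply hscal_distr_v. Qed.

Lemma pr_ds a b (x : Prod H) : pscal (a + b) x = padd (pscal a x) (pscal b x).
Proof. apply functional_extensionality_dep. intro i. apply hscal_distr_s. Qed.

Lemma pr_isym (x y : Prod H) : pinner x y = pinner y x.
Proof. unfold pinner. apply sumIdx_ext. intro; apply hinner_sym. Qed.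

Lemma pr_iadd (x y z : Prod H) : pinner (padd x y) z = pinner x z + pinner y z.
Proof. unfold pinner. rewrite <- sumIdx_plus. apply sumIdx_ext. intro; apply hinner_add_l. Qed.

Lemma pr_iscal a (x y : Prod H) : pinner (pscal a x) y = a * pinner x y.
Proof. unfold pinner. rewrite <- sumIdx_scal. apply sumIdx_ext. intro; apply hinner_scal_l. Qed.

Lemma pr_ipos (x : Prod H) : 0 <= pinner x x.
Proof. unfold pinner. apply sumIdx_nonneg. intro; apply hinner_pos. Qed.

Lemma pr_comp_le (x : Prod H) i : hinner (x i) (x i) <= pinner x x.
Proof. unfold pinner. apply (sumIdx_ge_term _ (fun j => hinner (x j) (x j))). intro; apply hinner_pos. Qed.

Lemma pr_idef (x : Prod H) : pinner x x = 0 -> x = (fun i => hzero).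
Proof.
  intros E. apply functional_extensionality_dep. intro i. apply hinner_def.
  pose proof (pr_comp_le x i). pose proof (hinner_pos (x i)). lra.
Qed.

(** Completeness: a Cauchy sequence is componentwise Cauchy. *)
Lemma pr_complete (u : nat -> Prod H) :
  (forall eps, eps > 0 -> exists N, forall p q, (p >= N)%nat -> (q >= N)%nat ->
     sqrt (pinner (padd (u p) (fun i => hopp (u q i))) (padd (u p) (fun i => hopp (u q i)))) < eps) ->
  exists l : Prod H, Un_cv (fun n => sqrt (pinner (padd (u n) (fun i => hopp (l i))) (padd (u n) (fun i => hopp (l i))))) 0.
Proof.
  intros Hc.
  assert (Hi : forall i, exists li, Un_cv (fun n => hnorm (hsub (u n i) li)) 0).
  { intro i. apply hcomplete. intros e He. destruct (Hc e He) as [N HN]. exists N. intros p q Hp Hq.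
    eapply Rle_lt_trans; [|apply (HN p q Hp Hq)]. apply sqrt_le_1_alt.
    apply (pr_comp_le (padd (u p) (fun i => hopp (u q i))) i). }
  set (l := fun i => proj1_sig (constructive_indefinite_description _ (Hi i))).
  assert (Hl : forall i, Un_cv (fun n => hnorm (hsub (u n i) (l i))) 0)
    by (intro i; exact (proj2_sig (constructive_indefinite_description _ (Hi i)))).
  exists l.
  apply sqrt_cv_of_cv; [intro; apply pr_ipos|].
  apply (sumIdx_cv _ (fun n i => hinner (hsub (u n i) (l i)) (hsub (u n i) (l i)))).
  intro i. apply cv_of_sqrt_cv; [intro; apply hinner_pos | apply Hl].
Qed.

Definition PH : Hilbert :=
  @mkHilbert (Prod H) (fun i => hzero) (@padd m H) (fun x i => hopp (x i)) (@pscal m H) (@pinner m H)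
    pr_assoc pr_comm pr_0 pr_opp pr_sassoc pr_s1 pr_dv pr_ds pr_isym pr_iadd pr_iscal pr_ipos pr_idef pr_complete.

Definition single (i : Idx m) (v : H i) : Prod H := upd (fun j => hzero) i v.

Lemma upd_same (xb : Prod H) i (v : H i) : upd xb i v i = v.
Proof. unfold upd. destruct (Idx_eq_dec i i) as [e|n]; [|congruence].
  rewrite (UIP_dec Idx_eq_dec e eq_refl). reflexivity. Qed.

Lemma upd_other (xb : Prod H) i (v : H i) j : i <> j -> upd xb i v j = xb j.
Proof. intros Hn. unfold upd. destruct (Idx_eq_dec i j); [congruence|auto]. Qed.

Lemma pinner_single (X : Prod H) i (v : H i) : pinner X (single i v) = hinner (X i) v.
Proof.
  unfold pinner. rewrite (sumIdx_single _ _ i). unfold single. rewrite upd_same. auto.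
  intros j Hj. unfold single. rewrite upd_other by auto. apply hinner_0r.
Qed.

End ProdH.

(** ** Bounded linear operators and their adjoints *)

Section Ops.
Variables (H1 G1 : Hilbert) (L : H1 -> G1) (Ls : G1 -> H1) (c : R).
Hypothesis HL : is_bounded_linear L.
Hypothesis HLs : is_adjoint L Ls.
Hypothesis Hc : is_opnorm L c.

Lemma L_sub u v : L (hsub u v) = hsub (L u) (L v).
Proof.
  destruct HL as [[Ha Hs] _]. unfold hsub. rewrite Ha, !hopp_scal, Hs. reflexivity.
Qed.

Lemma L_zero : L hzero = hzero.
Proof.
  destruct HL as [[Ha Hs] _]. rewrite <- (hscal_0 hzero), Hs, hscal_0. reflexivity.
Qed.

Lemma Ls_eq w e' : (forall v, hinner (L v) w = hinner v e') -> Ls w = e'.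
Proof.
  intros H. apply eq_of_dist0. rewrite hinner_sub_r.
  rewrite <- HLs, H. ring.
Qed.

Lemma Ls_sub w1 w2 : Ls (hsub w1 w2) = hsub (Ls w1) (Ls w2).
Proof. apply Ls_eq. intro v. rewrite !hinner_sub_r, !HLs. reflexivity. Qed.

Lemma Ls_opp_sub w1 w2 : Ls (hsub w1 w2) = hopp (Ls (hsub w2 w1)).
Proof. rewrite !Ls_sub. apply eq_of_dist0. iexp. ring. Qed.

Lemma c_nonneg : 0 <= c.
Proof.
  destruct Hc as [Hub _]. apply Rle_trans with (hnorm (L hzero)). apply hnorm_pos.
  apply Hub. exists hzero. split; auto. unfold hnorm. rewrite hinner_0l, sqrt_0. lra.
Qed.

Lemma L_bound u : hinner (L u) (L u) <= c ^ 2 * hinner u u.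
Proof.
  destruct (Req_dec (hinner u u) 0) as [E|E].
  - apply hinner_def in E. subst u. rewrite L_zero, !hinner_0l. lra.
  - destruct HL as [[Ha Hs] _]. destruct Hc as [Hub _].
    set (s := hnorm u). assert (spos: 0 < s).
    { unfold s, hnorm. apply sqrt_lt_R0. pose proof (hinner_pos u). lra. }
    assert (hnorm (L (hscal (/ s) u)) <= c).
    { apply Hub. exists (hscal (/ s) u). split; auto. rewrite hnorm_scal. fold s.
      rewrite Rabs_right. field_simplify; lra. apply Rle_ge, Rlt_le, Rinv_0_lt_compat; auto. }
    rewrite Hs, hnorm_scal in H. rewrite Rabs_right in H by (apply Rle_ge, Rlt_le, Rinv_0_lt_compat; auto).
    assert (hnorm (L u) <= c * s).
    { apply (Rmult_le_reg_l (/ s)). apply Rinv_0_lt_compat; auto.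
      replace (/ s * (c * s)) with c by (field; lra). lra. }
    rewrite <- !hnorm_sq. fold s. pose proof (hnorm_pos (L u)). simpl. nra.
Qed.

Lemma L_bound_n u : hnorm (L u) <= c * hnorm u.
Proof.
  pose proof (L_bound u). rewrite <- !hnorm_sq in H. pose proof (hnorm_pos (L u)). pose proof (hnorm_pos u).
  pose proof c_nonneg. apply Rsqr_incr_0_var; [|nra]. unfold Rsqr. simpl in H. nra.
Qed.

Lemma Ls_bound w : hinner (Ls w) (Ls w) <= c ^ 2 * hinner w w.
Proof.
  assert (E: hinner (Ls w) (Ls w) = hinner (L (Ls w)) w) by (rewrite HLs; reflexivity).
  pose proof (cauchy_schwarz (L (Ls w)) w). pose proof (L_bound_n (Ls w)).
  pose proof (hnorm_pos (Ls w)). pose proof (hnorm_pos w). pose proof (hnorm_pos (L (Ls w))). pose proof c_nonneg.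
  rewrite <- !hnorm_sq. rewrite <- hnorm_sq in E.
  assert (hnorm (Ls w) <= c * hnorm w).
  { destruct (Req_dec (hnorm (Ls w)) 0). nra.
    assert (hnorm (Ls w) * hnorm (Ls w) <= hnorm (Ls w) * (c * hnorm w)).
    { simpl in E. assert (hnorm (L (Ls w)) * hnorm w <= c * hnorm (Ls w) * hnorm w) by (apply Rmult_le_compat_r; auto). nra. }
    apply (Rmult_le_reg_l (hnorm (Ls w))); lra. }
  simpl. nra.
Qed.

End Ops.

Lemma adjoint_coupling_sub (H1 H2 G1 : Hilbert) (L1 : H1 -> G1) (L2 : H2 -> G1) (Ls1 : G1 -> H1)
  (HL1 : is_bounded_linear L1) (HL2 : is_bounded_linear L2) (HLs : is_adjoint L1 Ls1) a1 a2 b1 b2 :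
  hsub (Ls1 (hsub (L1 a1) (L2 a2))) (Ls1 (hsub (L1 b1) (L2 b2))) = Ls1 (hsub (L1 (hsub a1 b1)) (L2 (hsub a2 b2))).
Proof.
  rewrite <- (Ls_sub _ _ L1 Ls1 HLs). f_equal. rewrite (L_sub _ _ L1 HL1), (L_sub _ _ L2 HL2). apply eq_of_dist0. iexp. ring.
Qed.

Lemma prod_summable m (H : Idx m -> Hilbert) (a : forall i, nat -> H i) :
  (forall i, abs_summable (a i)) -> @abs_summable (PH m H) (fun n i => a i n).
Proof.
  intros Ha.
  destruct (choice _ Ha) as [A HA].
  exists (sumIdx A). intro N.
  apply Rle_trans with (sum_f_R0 (fun n => sumIdx (fun i => hnorm (a i n))) N).
  - apply sum_Rle. intros n _. exact (sumIdx_sqrt m (fun i => hinner (a i n) (a i n)) (fun i => hinner_pos _)).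
  - rewrite (sumIdx_sum_f m (fun n i => hnorm (a i n))). apply sumIdx_le. intro i. apply HA.
Qed.


(** ** The cyclic coupling operator on the direct sum *)

Section CyclicCoupling.
Variables (m : nat) (G : Hilbert) (H : Idx m -> Hilbert).
Variables (L : forall i, H i -> G) (Ls : forall i, G -> H i).
Hypothesis HL : forall i, is_bounded_linear (L i).
Hypothesis HLs : forall i, is_adjoint (L i) (Ls i).

Definition coupling (X : Prod H) : Prod H :=
  fun i => Ls i (hsub (L i (X i)) (L (next i) (X (next i)))).

Definition coupling_gap (X Y : Prod H) (i : Idx m) : G :=
  hsub (L i (hsub (X i) (Y i))) (L (next i) (hsub (X (next i)) (Y (next i)))).

Lemma coupling_sub X Y i :
  hsub (coupling X i) (coupling Y i) = Ls i (coupling_gap X Y i).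
Proof. apply (adjoint_coupling_sub _ _ _ _ _ _ (HL i) (HL (next i)) (HLs i)). Qed.

(** B is the gradient of 1/2 sum_i ||L_i X_i - L_(i+1) X_(i+1)||^2, and the
    cyclic sum telescopes: <X - Y, B X - B Y> = 1/2 sum_i ||gap_i||^2. *)
Lemma coupling_monotone_identity (Hm : (1 <= m)%nat) (X Y : Prod H) :
  @hinner (PH m H) (@hsub (PH m H) X Y) (@hsub (PH m H) (coupling X) (coupling Y)) =
  / 2 * sumIdx (fun i => hinner (coupling_gap X Y i) (coupling_gap X Y i)).
Proof.
  set (D := fun i => hsub (X i) (Y i)).
  change (sumIdx (fun i => hinner (D i) (hsub (coupling X i) (coupling Y i))) =
          / 2 * sumIdx (fun i => hinner (coupling_gap X Y i) (coupling_gap X Y i))).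
  rewrite (sumIdx_ext _ _ (fun i => / 2 * hinner (coupling_gap X Y i) (coupling_gap X Y i)
      + / 2 * hinner (L i (D i)) (L i (D i)) + (- / 2) * hinner (L (next i) (D (next i))) (L (next i) (D (next i))))).
  - rewrite !sumIdx_plus, !sumIdx_scal.
    rewrite (sumIdx_cyc m (fun j => hinner (L j (D j)) (L j (D j))) Hm). ring.
  - intro i. rewrite coupling_sub, <- (HLs i). unfold coupling_gap. fold (D i) (D (next i)). iexp. field.
Qed.

(** The solutions of the abstract theorem are exactly those of the proposition:
    -B z in the subdifferential of f at z is the hypothesis on z ... *)
Lemma coupling_solution (f : Prod H -> ER) (z : Prod H) :
  in_subdiff f z (fun i => Ls i (hsub (L (next i) (z (next i))) (L i (z i)))) ->
  fb_solution (PH m H) f coupling z.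
Proof.
  intros Hz. unfold fb_solution. replace (@hopp (PH m H) (coupling z))
    with (fun i => Ls i (hsub (L (next i) (z (next i))) (L i (z i)))); [exact Hz|].
  apply functional_extensionality_dep. intro i. apply (Ls_opp_sub _ _ _ _ (HLs i)).
Qed.

Lemma quadratic_gradient_ineq i (u v : H i) (g : G) :
  hinner (hsub u v) (Ls i (hsub (L i v) g)) + / 2 * hnorm (hsub (L i v) g) ^ 2
  <= / 2 * hnorm (hsub (L i u) g) ^ 2.
Proof.
  rewrite <- (HLs i), (L_sub _ _ (L i) (HL i)), !hnorm_sq.
  pose proof (hinner_pos (hsub (L i u) (L i v))). revert H0. iexp. intro. lra.
Qed.

(** ... and a solution c is a componentwise minimiser, since changing the
    i-th coordinate only involves the i-th component of B c. *)
Lemma coupling_solution_argmin (f : Prod H -> ER) (c : Prod H) :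
  fb_solution (PH m H) f coupling c -> forall i (y : H i),
  ERle (ERadd (f c) (Fin (/2 * (hnorm (hsub (L i (c i)) (L (next i) (c (next i)))))^2)))
       (ERadd (f (upd c i y)) (Fin (/2 * (hnorm (hsub (L i y) (L (next i) (c (next i)))))^2))).
Proof.
  intros Sc i y. destruct (subgradient_finite _ _ _ _ Sc) as [fc [Ec Hmin]].
  rewrite Ec. destruct (f (upd c i y)) as [vq|] eqn:Eq; [|exact I]. cbn [ERadd ERle].
  specialize (Hmin (upd c i y) vq Eq).
  assert (Hcoord : @hinner (PH m H) (@hsub (PH m H) (upd c i y) c) (@hopp (PH m H) (coupling c))
      = - hinner (hsub y (c i)) (coupling c i)).
  { change (sumIdx (fun j => hinner (hsub (upd c i y j) (c j)) (hopp (coupling c j)))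
      = - hinner (hsub y (c i)) (coupling c i)).
    rewrite (sumIdx_single _ _ i), upd_same, hinner_opp_r; [reflexivity|].
    intros j Hj. rewrite upd_other by auto. iexp. ring. }
  pose proof (quadratic_gradient_ineq i y (c i) (L (next i) (c (next i)))). rewrite Hcoord in Hmin.
  unfold coupling in Hmin. lra.
Qed.

Lemma weak_cv_component (X : nat -> Prod H) (c : Prod H) i :
  @weak_cv (PH m H) X c -> weak_cv (fun n => X n i) (c i).
Proof.
  intros Wc v. pose proof (Wc (single m H i v)) as W.
  change (Un_cv (fun n => pinner (X n) (single m H i v)) (pinner c (single m H i v))) in W.
  rewrite (pinner_single m H c i v) in W.
  eapply Un_cv_ext; [|exact W]. intro n. apply pinner_single.
Qed.

Lemma coupling_strong_component (X : nat -> Prod H) (c : Prod H) i :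
  Un_cv (fun n => @hnorm (PH m H) (@hsub (PH m H) (coupling (X n)) (coupling c))) 0 ->
  strong_cv (fun n => Ls i (hsub (L i (hsub (X n i) (c i))) (L (next i) (hsub (X n (next i)) (c (next i)))))) hzero.
Proof.
  intros Bc. apply (squeeze0 _ (fun n => @hnorm (PH m H) (@hsub (PH m H) (coupling (X n)) (coupling c))));
    [intro; apply hnorm_pos | intro n | exact Bc].
  replace (hsub (Ls i (hsub (L i (hsub (X n i) (c i))) (L (next i) (hsub (X n (next i)) (c (next i)))))) hzero)
    with (hsub (coupling (X n) i) (coupling c i))
    by (rewrite coupling_sub; apply eq_of_dist0; unfold coupling_gap; iexp; ring).
  apply sqrt_le_1_alt. exact (pr_comp_le m H (@hsub (PH m H) (coupling (X n)) (coupling c)) i).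
Qed.

Variable nL : Idx m -> R.
Hypothesis HnL : forall i, is_opnorm (L i) (nL i).
Variable M : R.
Hypothesis HM : forall i, nL i ^ 2 <= M.

Lemma coupling_lipschitz_sq (X Y : Prod H) :
  @hinner (PH m H) (@hsub (PH m H) (coupling X) (coupling Y)) (@hsub (PH m H) (coupling X) (coupling Y)) <=
  M * sumIdx (fun i => hinner (coupling_gap X Y i) (coupling_gap X Y i)).
Proof.
  change (sumIdx (fun i => hinner (hsub (coupling X i) (coupling Y i)) (hsub (coupling X i) (coupling Y i)))
     <= M * sumIdx (fun i => hinner (coupling_gap X Y i) (coupling_gap X Y i))).
  rewrite <- sumIdx_scal. apply sumIdx_le. intro i. rewrite coupling_sub.
  eapply Rle_trans; [apply (Ls_bound _ _ (L i) (Ls i) (nL i) (HL i) (HLs i) (HnL i))|].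
  apply Rmult_le_compat_r; [apply hinner_pos | apply HM].
Qed.

Lemma coupling_cocoercive (Hm : (1 <= m)%nat) (Mpos : 0 < M) (X Y : PH m H) :
  / (2 * M) * hinner (@hsub (PH m H) (coupling X) (coupling Y)) (@hsub (PH m H) (coupling X) (coupling Y)) <=
  hinner (hsub X Y) (@hsub (PH m H) (coupling X) (coupling Y)).
Proof.
  rewrite (coupling_monotone_identity Hm). pose proof (coupling_lipschitz_sq X Y).
  assert (Hk : 0 < / (2 * M)) by (apply Rinv_0_lt_compat; lra).
  apply Rmult_le_compat_l with (r := / (2 * M)) in H0; [|lra].
  replace (/ (2 * M) * (M * sumIdx (fun i => hinner (coupling_gap X Y i) (coupling_gap X Y i))))
    with (/ 2 * sumIdx (fun i => hinner (coupling_gap X Y i) (coupling_gap X Y i))) in H0 by (field; lra).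
  exact H0.
Qed.

End CyclicCoupling.

Lemma opnorm_max_pos (m : nat) (G : Hilbert) (H : Idx m -> Hilbert)
  (L : forall i : Idx m, H i -> G) (nL : Idx m -> R)
  (HL : forall i, is_bounded_linear (L i)) (HnL : forall i, is_opnorm (L i) (nL i)) :
  (exists i (x : H i), L i x <> hzero) -> 0 < maxIdx (fun i => nL i ^ 2).
Proof.
  intros [i0 [x0 Hx0]].
  pose proof (L_bound _ _ (L i0) (nL i0) (HL i0) (HnL i0) x0) as LB.
  assert (Hpos : 0 < hinner (L i0 x0) (L i0 x0)).
  { destruct (Req_dec (hinner (L i0 x0) (L i0 x0)) 0) as [E|E];
      [apply hinner_def in E; contradiction | pose proof (hinner_pos (L i0 x0)); lra]. }
  pose proof (maxIdx_ge m (fun i => nL i ^ 2) i0). pose proof (hinner_pos x0).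
  assert (nL i0 ^ 2 <> 0) by (intro E; rewrite E in LB; lra).
  pose proof (pow2_ge_0 (nL i0)). cbv beta in *. lra.
Qed.

Theorem proposition4p7
  (m : nat) (Hm : (2 <= m)%nat)
  (G : Hilbert) (H : Idx m -> Hilbert)
  (f : Prod H -> ER) (Hf : Gamma0 f)
  (L : forall i : Idx m, H i -> G) (Ls : forall i : Idx m, G -> H i)
  (nL : Idx m -> R)
  (HL : forall i, is_bounded_linear (L i))
  (HLs : forall i, is_adjoint (L i) (Ls i))
  (HnL : forall i, is_opnorm (L i) (nL i))
  (Hnz : exists i (x : H i), L i x <> hzero)
  (Hsol : exists z : Prod H,
     in_subdiff f z (fun i => Ls i (hsub (L (next i) (z (next i))) (L i (z i)))))
  (eps : R) (gamma : nat -> R)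
  (Heps : 0 < eps < 2 / (2 * maxIdx (fun i => (nL i)^2) + 1))
  (Hgamma : forall n, eps <= gamma n <= (2 - eps) / (2 * maxIdx (fun i => (nL i)^2)))
  (x a b : forall i : Idx m, nat -> H i)
  (Ha : forall i, abs_summable (a i))
  (Hb : forall i, abs_summable (b i))
  (Hiter : forall n,
     is_prox (gamma n) f
       (fun i => hsub (x i n)
                   (hscal (gamma n)
                      (hadd (Ls i (hsub (L i (x i n)) (L (next i) (x (next i) n))))
                            (a i n))))
       (fun i => hsub (x i (S n)) (b i n))) :
  exists xb : Prod H,
    forall i : Idx m,
      (forall y : H i,
         ERle (ERadd (f xb) (Fin (/2 * (hnorm (hsub (L i (xb i)) (L (next i) (xb (next i)))))^2)))
              (ERadd (f (upd xb i y))
                     (Fin (/2 * (hnorm (hsub (L i y) (L (next i) (xb (next i)))))^2))))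
      /\ weak_cv (x i) (xb i)
      /\ strong_cv
           (fun n => Ls i (hsub (L i (hsub (x i n) (xb i)))
                                (L (next i) (hsub (x (next i) n) (xb (next i))))))
           hzero.
Proof.
  destruct Hf as [_ [Hconv Hlsc]]. destruct Hsol as [z Hz].
  set (M := maxIdx (fun i => nL i ^ 2)) in *.
  assert (Mpos : 0 < M) by exact (opnorm_max_pos m G H L nL HL HnL Hnz).
  assert (Hcoco := coupling_cocoercive m G H L Ls HL HLs nL HnL M
    (fun i => maxIdx_ge m (fun i => nL i ^ 2) i) ltac:(lia) Mpos).
  destruct (forward_backward_cv (PH m H) f Hconv Hlsc (coupling m G H L Ls) (/ (2 * M))
      ltac:(apply Rinv_0_lt_compat; lra) Hcoco eps gamma (proj1 Heps) Hgamma
      (fun n i => x i n) (fun n i => a i n) (fun n i => b i n)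
      (prod_summable m H a Ha) (prod_summable m H b Hb) Hiter z
      (coupling_solution m G H L Ls HLs f z Hz)) as [c [Sc [Wc Bc]]].
  exists c. intro i. split; [|split].
  - exact (coupling_solution_argmin m G H L Ls HL HLs f c Sc i).
  - exact (weak_cv_component m H (fun n i => x i n) c i Wc).
  - exact (coupling_strong_component m G H L Ls HL HLs (fun n i => x i n) c i Bc).
Qed.
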